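(* Let $\varphi(z)=1+B_1z+B_2z^2+B_3z^3+\cdots$ be analytic in $\mathbb{D}$ with $B_1>0$ and $B_2\in\mathbb{R}$. Let $f(z)=z+\sum_{n\ge2}a_nz^n$ belong to $\sigma$, with inverse $F=f^{-1}$ on $\mathbb{D}$, and suppose \[\frac{zf'(z)}{f(z)}\prec\varphi(z)\quad\text{and}\quad F'(w)\prec\varphi(w)\] (i.e. $f\in\mathcal{S}^*(\varphi)$ and $F\in\mathcal{R}(\varphi)$). Then \[|a_2|\le\frac{\sqrt{5\,(B_1+|B_2-B_1|)}}{3}\quad\text{and}\quad |a_3|\le\frac{7\,(B_1+|B_2-B_1|)}{9}.\]
   Context: $\mathbb{D}=\{z\in\mathbb{C}:|z|<1\}$. $\mathcal{A}$ denotes the class of analytic functions $f$ on $\mathbb{D}$ with $f(0)=0$, $f'(0)=1$, i.e. $f(z)=z+\sum_{n\ge2}a_nz^n$. The class $\sigma$ of bi-univalent functions consists of those $f\in\mathcal{A}$ that are univalent in $\mathbb{D}$ and whose inverse $f^{-1}$ (defined near $0$) extends to a univalent analytic function $F$ on $\mathbb{D}$; then $F(w)=w-a_2w^2+(2a_2^2-a_3)w^3+\cdots$. For analytic $g,h$ on $\mathbb{D}$, $g\prec h$ (subordination) means there is an analytic $\omega:\mathbb{D}\to\mathbb{D}$ with $\omega(0)=0$ and $g=h\circ\omega$. *)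

From Stdlib Require Import Reals.
Open Scope R_scope.

Record Cplx : Type := mkC { Re : R ; Im : R }.

Definition RtoC (x : R) : Cplx := mkC x 0.
Definition Czero : Cplx := RtoC 0.
Definition Cone : Cplx := RtoC 1.
Definition Cadd (z w : Cplx) : Cplx := mkC (Re z + Re w) (Im z + Im w).
Definition Copp (z : Cplx) : Cplx := mkC (- Re z) (- Im z).
Definition Csub (z w : Cplx) : Cplx := Cadd z (Copp w).
Definition Cmul (z w : Cplx) : Cplx :=
  mkC (Re z * Re w - Im z * Im w) (Re z * Im w + Im z * Re w).
Definition Cinv (z : Cplx) : Cplx :=
  mkC (Re z / (Re z * Re z + Im z * Im z)) (- Im z / (Re z * Re z + Im z * Im z)).
Definition Cdiv (z w : Cplx) : Cplx := Cmul z (Cinv w).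
Definition Cnorm (z : Cplx) : R := sqrt (Re z * Re z + Im z * Im z).
Fixpoint Cpow (z : Cplx) (n : nat) : Cplx :=
  match n with O => Cone | S m => Cmul z (Cpow z m) end.

Definition Ceq_dec (z w : Cplx) : {z = w} + {z <> w}.
Proof.
  destruct z as [a b], w as [c d].
  destruct (Req_EM_T a c) as [H1|H1]; destruct (Req_EM_T b d) as [H2|H2].
  - left; subst; reflexivity.
  - right; intro H; inversion H; auto.
  - right; intro H; inversion H; auto.
  - right; intro H; inversion H; auto.
Defined.

Definition inD (z : Cplx) : Prop := Cnorm z < 1.

Definition is_cderiv (f : Cplx -> Cplx) (z L : Cplx) : Prop :=
  forall eps : R, 0 < eps -> exists delta : R, 0 < delta /\
    forall h : Cplx, h <> Czero -> Cnorm h < delta ->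
      Cnorm (Csub (Cdiv (Csub (f (Cadd z h)) (f z)) h) L) < eps.

Definition analytic_D (f : Cplx -> Cplx) : Prop :=
  forall z, inD z -> exists L, is_cderiv f z L.

Fixpoint Cpsum (c : nat -> Cplx) (z : Cplx) (n : nat) : Cplx :=
  match n with
  | O => c O
  | S m => Cadd (Cpsum c z m) (Cmul (c (S m)) (Cpow z (S m)))
  end.

Definition has_series (c : nat -> Cplx) (f : Cplx -> Cplx) : Prop :=
  forall z, inD z ->
    forall eps : R, 0 < eps -> exists N : nat, forall n : nat, (n >= N)%nat ->
      Cnorm (Csub (Cpsum c z n) (f z)) < eps.

Definition univalent_D (f : Cplx -> Cplx) : Prop :=
  forall z w, inD z -> inD w -> f z = f w -> z = w.

Definition subordinate (g h : Cplx -> Cplx) : Prop :=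
  exists omega : Cplx -> Cplx,
    analytic_D omega /\ (forall z, inD z -> inD (omega z)) /\ omega Czero = Czero /\
    (forall z, inD z -> g z = h (omega z)).

(** f in A with Taylor coefficients a (a_0 = 0, a_1 = 1), univalent on D,
    and F analytic univalent on D extending the local inverse f^{-1} near 0. *)
Definition bi_univalent_with (a : nat -> Cplx) (f F : Cplx -> Cplx) : Prop :=
  has_series a f /\ a O = Czero /\ a 1%nat = Cone /\
  univalent_D f /\
  analytic_D F /\ univalent_D F /\
  exists r : R, 0 < r /\
    forall w, Cnorm w < r -> inD (F w) /\ f (F w) = w.

(** z f'(z)/f(z), with its removable value 1 at z = 0. *)
Definition starlike_quot (f df : Cplx -> Cplx) (z : Cplx) : Cplx :=
  if Ceq_dec z Czero then Cone else Cdiv (Cmul z (df z)) (f z).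

(* Write the two subordinations with Schwarz functions
   ω1 = c1 z + c2 z^2 + ...,  ω2 = d1 w + d2 w^2 + ....  Comparing second
   Taylor coefficients gives
       2 a3 - a2^2   = B1 c2 + B2 c1^2,
       6 a2^2 - 3 a3 = B1 d2 + B2 d1^2,
   and the Carathéodory lemma applied to (1 + ω)/(1 - ω) gives |c1| <= 1 and
   |c2 + c1^2| <= 1, so each right-hand side has modulus <= B1 + |B2 - B1|.
   The identities 9 a2^2 = 3 (2a3 - a2^2) + 2 (6a2^2 - 3a3) and
   9 a3 = 6 (2a3 - a2^2) + (6a2^2 - 3a3) then yield the bounds. *)

From Stdlib Require Import Reals Lra Lia.
From Coquelicot Require Import Coquelicot.
From Pilot Require Defs.
Open Scope R_scope.

Notation C0 := (RtoC 0).
Notation C1 := (RtoC 1).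

(** * The unit circle parametrisation [cis t = e^{it}] *)

Definition cis (t : R) : C := (cos t, sin t).

Lemma C_eq (x y : C) : fst x = fst y -> snd x = snd y -> x = y.
Proof. destruct x, y; simpl; intros; subst; auto. Qed.

Lemma Cmod_cis t : Cmod (cis t) = 1.
Proof.
  unfold Cmod, cis; simpl. pose proof (sin2_cos2 t) as H. unfold Rsqr in H.
  replace (cos t * (cos t * 1) + sin t * (sin t * 1)) with 1 by lra. apply sqrt_1.
Qed.

Lemma cis_add s t : cis (s + t) = (cis s * cis t)%C.
Proof. apply C_eq; simpl; [rewrite cos_plus | rewrite sin_plus]; ring. Qed.

Lemma cis_0 : cis 0 = C1.
Proof. apply C_eq; simpl; [rewrite cos_0 | rewrite sin_0]; auto. Qed.

Lemma cis_2PI : cis (2 * PI) = C1.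
Proof. apply C_eq; simpl; [rewrite cos_2PI | rewrite sin_2PI]; auto. Qed.

Lemma cis_neq0 t : cis t <> C0.
Proof. intro H. pose proof (Cmod_cis t) as H1. rewrite H, Cmod_0 in H1. lra. Qed.

Lemma cis_opp t : cis (- t) = (/ cis t)%C.
Proof.
  assert (H : (cis t * cis (- t))%C = C1).
  { rewrite <- cis_add. replace (t + - t) with 0 by ring. apply cis_0. }
  pose proof (cis_neq0 t).
  replace (cis (- t)) with (/ cis t * (cis t * cis (- t)))%C by (field; auto).
  rewrite H. field; auto.
Qed.

Lemma cis_nat n t : cis (INR n * t) = (cis t ^ n)%C.
Proof.
  induction n as [|n IH].
  - simpl. replace (0 * t) with 0 by ring. apply cis_0.
  - rewrite S_INR, Cpow_S. replace ((INR n + 1) * t) with (t + INR n * t) by ring.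
    rewrite cis_add, IH. reflexivity.
Qed.

Lemma cis_2PI_nat n : cis (INR n * (2 * PI)) = C1.
Proof. rewrite cis_nat, cis_2PI. apply Cpow_1_l. Qed.

Lemma conj_cis t : Cconj (cis t) = cis (- t).
Proof. apply C_eq; simpl; [rewrite cos_neg | rewrite sin_neg]; auto. Qed.

Lemma Cmod_le_sum (x : C) : Cmod x <= Rabs (fst x) + Rabs (snd x).
Proof.
  unfold Cmod. pose proof (Rabs_pos (fst x)). pose proof (Rabs_pos (snd x)).
  apply Rsqr_incr_0_var; [|lra]. rewrite Rsqr_sqrt by nra. unfold Rsqr. simpl.
  replace (fst x * (fst x * 1) + snd x * (snd x * 1))
    with (Rabs (fst x) * Rabs (fst x) + Rabs (snd x) * Rabs (snd x)) by
    (rewrite <- !Rabs_mult, !Rabs_right by nra; ring).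
  nra.
Qed.

Lemma lipschitz_of_deriv_bound (g g' : R -> R) s t :
  (forall c, derivable_pt_lim g c (g' c)) -> (forall c, Rabs (g' c) <= 1) ->
  Rabs (g t - g s) <= Rabs (t - s).
Proof.
  intros Hd Hb. destruct (MVT_abs g g' s t) as [c [Hc _]]; [intros; apply Hd|].
  rewrite Hc. pose proof (Hb c). pose proof (Rabs_pos (t - s)). nra.
Qed.

Lemma cis_lipschitz s t : Cmod (cis t - cis s) <= 2 * Rabs (t - s).
Proof.
  assert (Hc : Rabs (cos t - cos s) <= Rabs (t - s)).
  { apply (lipschitz_of_deriv_bound cos (fun x => - sin x)).
    - intros; apply derivable_pt_lim_cos.
    - intros c; rewrite Rabs_Ropp; pose proof (SIN_bound c); apply Rabs_le; lra. }
  assert (Hs : Rabs (sin t - sin s) <= Rabs (t - s)).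
  { apply (lipschitz_of_deriv_bound sin cos).
    - intros; apply derivable_pt_lim_sin.
    - intros c; pose proof (COS_bound c); apply Rabs_le; lra. }
  eapply Rle_trans; [apply Cmod_le_sum|]. simpl.
  replace (cos t + - cos s) with (cos t - cos s) by ring.
  replace (sin t + - sin s) with (sin t - sin s) by ring. lra.
Qed.

Lemma Cmod_polar r t : Cmod (RtoC r * cis t)%C = Rabs r.
Proof. rewrite Cmod_mult, Cmod_R, Cmod_cis. ring. Qed.

Lemma RtoC_neq0 r : r <> 0 -> RtoC r <> C0.
Proof. intros h H. apply h. injection H. auto. Qed.

Lemma Cmod_minus_le (x y : C) : Cmod (x - y) <= Cmod x + Cmod y.
Proof. eapply Rle_trans; [apply Cmod_triangle|]. rewrite Cmod_opp. lra. Qed.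

(** * Complex differentiability *)

Definition small_o (g : C -> C) : Prop :=
  forall eps, 0 < eps -> exists delta, 0 < delta /\
    forall k, Cmod k < delta -> Cmod (g k) <= eps * Cmod k.

Definition bounded_near0 (c : C -> C) : Prop :=
  exists delta M, 0 < delta /\ forall k, Cmod k < delta -> Cmod (c k) <= M.

Definition has_cderiv (q : C -> C) (z L : C) : Prop :=
  small_o (fun k => q (z + k) - q z - L * k)%C.

Lemma small_o_ext g h : (forall k, g k = h k) -> small_o g -> small_o h.
Proof.
  intros E H eps he. destruct (H eps he) as [d [hd Hd]].
  exists d; split; auto. intros k hk; rewrite <- E; auto.
Qed.

Lemma small_o_ext_loc g h d0 : 0 < d0 -> (forall k, Cmod k < d0 -> g k = h k) ->
  small_o g -> small_o h.
Proof.
  intros h0 E H eps he. destruct (H eps he) as [d [hd Hd]].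
  exists (Rmin d d0); split; [apply Rmin_glb_lt; auto|].
  intros k hk. rewrite <- E by (eapply Rlt_le_trans; [apply hk|apply Rmin_r]).
  apply Hd. eapply Rlt_le_trans; [apply hk|apply Rmin_l].
Qed.

Lemma small_o_plus g h : small_o g -> small_o h -> small_o (fun k => g k + h k)%C.
Proof.
  intros Hg Hh eps he. destruct (Hg (eps/2)) as [d1 [h1 H1]]; [lra|].
  destruct (Hh (eps/2)) as [d2 [h2 H2]]; [lra|].
  exists (Rmin d1 d2); split; [apply Rmin_glb_lt; auto|].
  intros k hk. eapply Rle_trans; [apply Cmod_triangle|].
  pose proof (H1 k (Rlt_le_trans _ _ _ hk (Rmin_l _ _))).
  pose proof (H2 k (Rlt_le_trans _ _ _ hk (Rmin_r _ _))). lra.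
Qed.

Lemma small_o_opp g : small_o g -> small_o (fun k => - g k)%C.
Proof.
  intros H eps he. destruct (H eps he) as [d [hd Hd]].
  exists d; split; auto. intros k hk; rewrite Cmod_opp; auto.
Qed.

Lemma small_o_mul g c : bounded_near0 c -> small_o g -> small_o (fun k => c k * g k)%C.
Proof.
  intros [d0 [M [hd0 HM]]] Hg eps he.
  assert (hM : 0 <= M).
  { pose proof (Cmod_ge_0 (c C0)). assert (Cmod (c C0) <= M) by (apply HM; rewrite Cmod_0; lra). lra. }
  destruct (Hg (eps / (M + 1))) as [d1 [h1 H1]]; [apply Rdiv_lt_0_compat; lra|].
  exists (Rmin d0 d1); split; [apply Rmin_glb_lt; auto|].
  intros k hk. rewrite Cmod_mult.
  pose proof (HM k (Rlt_le_trans _ _ _ hk (Rmin_l _ _))).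
  pose proof (H1 k (Rlt_le_trans _ _ _ hk (Rmin_r _ _))).
  pose proof (Cmod_ge_0 (g k)). pose proof (Cmod_ge_0 k).
  assert (Hm : M * (eps / (M + 1)) <= eps).
  { apply Rmult_le_reg_r with (M + 1); [lra|]. field_simplify; nra. }
  apply Rle_trans with (M * (eps / (M + 1) * Cmod k)).
  - apply Rmult_le_compat; auto. apply Cmod_ge_0.
  - rewrite <- Rmult_assoc. apply Rmult_le_compat_r; auto.
Qed.

Lemma small_o_quad g :
  (exists delta M, 0 < delta /\ forall k, Cmod k < delta -> Cmod (g k) <= M * Cmod k * Cmod k) ->
  small_o g.
Proof.
  intros [d0 [M [hd0 HM]]] eps he. pose proof (Rabs_pos M). pose proof (Rle_abs M).
  exists (Rmin d0 (eps / (Rabs M + 1))); split.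
  { apply Rmin_glb_lt; auto. apply Rdiv_lt_0_compat; lra. }
  intros k hk. pose proof (HM k (Rlt_le_trans _ _ _ hk (Rmin_l _ _))).
  pose proof (Rlt_le_trans _ _ _ hk (Rmin_r _ _)) as Hk. pose proof (Cmod_ge_0 k).
  assert (Cmod k * (Rabs M + 1) < eps).
  { apply Rmult_lt_reg_r with (/ (Rabs M + 1)); [apply Rinv_0_lt_compat; lra|].
    rewrite Rmult_assoc, Rinv_r by lra. lra. }
  nra.
Qed.

Lemma bounded_near0_const c : bounded_near0 (fun _ => c).
Proof. exists 1, (Cmod c). split; [lra|]. intros; lra. Qed.

Lemma cderiv_lipschitz q z L : has_cderiv q z L -> exists delta, 0 < delta /\
  forall k, Cmod k < delta -> Cmod (q (z + k) - q z)%C <= (Cmod L + 1) * Cmod k.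
Proof.
  intros H. destruct (H 1) as [d [hd Hd]]; [lra|]. exists d; split; auto.
  intros k hk. specialize (Hd k hk).
  replace (q (z + k) - q z)%C with ((q (z + k) - q z - L * k) + L * k)%C by ring.
  eapply Rle_trans; [apply Cmod_triangle|]. rewrite Cmod_mult. lra.
Qed.

Lemma cderiv_continuous q w0 L : has_cderiv q w0 L -> forall eps, 0 < eps ->
  exists delta, 0 < delta /\ forall w, Cmod (w - w0) < delta -> Cmod (q w - q w0) < eps.
Proof.
  intros H eps he. destruct (cderiv_lipschitz q w0 L H) as [d [hd Hd]].
  pose proof (Cmod_ge_0 L).
  exists (Rmin d (eps / (Cmod L + 2))). split; [apply Rmin_glb_lt; auto; apply Rdiv_lt_0_compat; lra|].
  intros w hw. pose proof (Hd (w - w0)%C (Rlt_le_trans _ _ _ hw (Rmin_l _ _))) as H1.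
  replace (w0 + (w - w0))%C with w in H1 by ring.
  pose proof (Rlt_le_trans _ _ _ hw (Rmin_r _ _)). pose proof (Cmod_ge_0 (w - w0)%C).
  eapply Rle_lt_trans; [apply H1|].
  apply Rle_lt_trans with ((Cmod L + 1) * (eps / (Cmod L + 2))); [apply Rmult_le_compat_l; lra|].
  apply Rlt_le_trans with ((Cmod L + 2) * (eps / (Cmod L + 2))).
  - apply Rmult_lt_compat_r; [apply Rdiv_lt_0_compat|]; lra.
  - right; field; lra.
Qed.

Lemma cderiv_bounded q z L : has_cderiv q z L -> exists delta M, 0 < delta /\
  forall w, Cmod (w - z) < delta -> Cmod (q w) <= M.
Proof.
  intros H. destruct (cderiv_continuous q z L H 1) as [d [hd Hd]]; [lra|].
  exists d, (Cmod (q z) + 1). split; auto. intros w hw. specialize (Hd w hw).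
  replace (q w) with (q z + (q w - q z))%C by ring.
  eapply Rle_trans; [apply Cmod_triangle|]. lra.
Qed.

Lemma cderiv_bounded_near0 q z L : has_cderiv q z L -> bounded_near0 (fun k => q (z + k)%C).
Proof.
  intros H. destruct (cderiv_bounded q z L H) as [d [M [hd Hd]]].
  exists d, M. split; auto. intros k hk. apply Hd. replace (z + k - z)%C with k by ring. auto.
Qed.

Lemma cderiv_const c z : has_cderiv (fun _ => c) z C0.
Proof.
  intros eps he. exists 1. split; [lra|]. intros k _.
  replace (c - c - C0 * k)%C with C0 by ring. rewrite Cmod_0. pose proof (Cmod_ge_0 k); nra.
Qed.

Lemma cderiv_id z : has_cderiv (fun w => w) z C1.
Proof.
  intros eps he. exists 1. split; [lra|]. intros k _.
  replace (z + k - z - C1 * k)%C with C0 by ring. rewrite Cmod_0. pose proof (Cmod_ge_0 k); nra.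
Qed.

Lemma cderiv_plus q1 q2 z L1 L2 : has_cderiv q1 z L1 -> has_cderiv q2 z L2 ->
  has_cderiv (fun w => q1 w + q2 w)%C z (L1 + L2)%C.
Proof. intros H1 H2. eapply small_o_ext; [|apply (small_o_plus _ _ H1 H2)]. intros k; simpl; ring. Qed.

Lemma cderiv_opp q z L : has_cderiv q z L -> has_cderiv (fun w => - q w)%C z (- L)%C.
Proof. intros H. eapply small_o_ext; [|apply (small_o_opp _ H)]. intros k; simpl; ring. Qed.

Lemma cderiv_minus q1 q2 z L1 L2 : has_cderiv q1 z L1 -> has_cderiv q2 z L2 ->
  has_cderiv (fun w => q1 w - q2 w)%C z (L1 - L2)%C.
Proof. intros H1 H2. apply (cderiv_plus _ _ _ _ _ H1 (cderiv_opp _ _ _ H2)). Qed.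

Lemma cderiv_mult q1 q2 z L1 L2 : has_cderiv q1 z L1 -> has_cderiv q2 z L2 ->
  has_cderiv (fun w => q1 w * q2 w)%C z (L1 * q2 z + q1 z * L2)%C.
Proof.
  intros H1 H2.
  assert (Hq : small_o (fun k => L1 * k * (q2 (z + k) - q2 z))%C).
  { apply small_o_quad. destruct (cderiv_lipschitz _ _ _ H2) as [d [hd Hd]].
    exists d, (Cmod L1 * (Cmod L2 + 1)). split; auto. intros k hk.
    rewrite !Cmod_mult. pose proof (Hd k hk).
    pose proof (Cmod_ge_0 L1); pose proof (Cmod_ge_0 k).
    replace (Cmod L1 * (Cmod L2 + 1) * Cmod k * Cmod k)
      with (Cmod L1 * Cmod k * ((Cmod L2 + 1) * Cmod k)) by ring.
    apply Rmult_le_compat_l; nra. }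
  pose proof (small_o_mul _ _ (cderiv_bounded_near0 _ _ _ H2) H1) as A1.
  pose proof (small_o_mul _ _ (bounded_near0_const (q1 z)) H2) as A2.
  eapply small_o_ext; [|apply (small_o_plus _ _ (small_o_plus _ _ A1 A2) Hq)].
  intros k; simpl; ring.
Qed.

Lemma cderiv_scal c q z L : has_cderiv q z L -> has_cderiv (fun w => c * q w)%C z (c * L)%C.
Proof.
  intros H. eapply small_o_ext; [|apply (cderiv_mult _ _ _ _ _ (cderiv_const c z) H)].
  intros k; simpl; ring.
Qed.

Lemma cderiv_pow n z : has_cderiv (fun w => w ^ S n)%C z (INR (S n) * z ^ n)%C.
Proof.
  induction n as [|n IH].
  - eapply small_o_ext; [|apply (cderiv_id z)]. intros k; simpl; ring.
  - eapply small_o_ext; [|apply (cderiv_mult _ _ _ _ _ (cderiv_id z) IH)]. intros k; cbv beta.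
    replace (RtoC (INR (S (S n)))) with (RtoC (INR (S n)) + C1)%C
      by (rewrite (S_INR (S n)); apply C_eq; simpl; ring).
    rewrite !(Cpow_S _ (S n)), !(Cpow_S z n). ring.
Qed.

Lemma cderiv_pow_ex n w : exists L, has_cderiv (fun w => w ^ n)%C w L.
Proof. destruct n. - exists C0. exact (cderiv_const C1 w). - eexists. apply cderiv_pow. Qed.

Lemma cderiv_away_from_zero q z L : has_cderiv q z L -> q z <> C0 ->
  exists delta, 0 < delta /\ forall k, Cmod k < delta -> Cmod (q z) / 2 <= Cmod (q (z + k)%C).
Proof.
  intros H hz. assert (hq : 0 < Cmod (q z)) by (apply Cmod_gt_0; auto).
  destruct (cderiv_continuous q z L H (Cmod (q z) / 2)) as [d [hd Hd]]; [lra|].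
  exists d. split; auto. intros k hk.
  assert (Hk : Cmod (q (z + k) - q z)%C < Cmod (q z) / 2)
    by (apply Hd; replace (z + k - z)%C with k by ring; auto).
  pose proof (Cmod_minus_le (q (z + k)%C) (q (z + k) - q z)%C) as Ht.
  replace (q (z + k) - (q (z + k) - q z))%C with (q z) in Ht by ring. lra.
Qed.

Lemma cderiv_inv q z L : has_cderiv q z L -> q z <> C0 ->
  has_cderiv (fun w => / q w)%C z (- L / (q z * q z))%C.
Proof.
  intros H hz. assert (hq : 0 < Cmod (q z)) by (apply Cmod_gt_0; auto).
  destruct (cderiv_away_from_zero q z L H hz) as [d1 [hd1 Hlow]].
  destruct (cderiv_lipschitz q z L H) as [d2 [hd2 Hlip]].
  set (d := Rmin d1 d2). assert (hd : 0 < d) by (apply Rmin_glb_lt; auto).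
  assert (Hnz : forall k, Cmod k < d -> q (z + k)%C <> C0).
  { intros k hk E0. pose proof (Hlow k (Rlt_le_trans _ _ _ hk (Rmin_l _ _))).
    rewrite E0, Cmod_0 in H0. lra. }
  assert (A1 : small_o (fun k => - / (q z * q (z + k)) * (q (z + k) - q z - L * k))%C).
  { apply small_o_mul; auto. exists d, (2 / (Cmod (q z) * Cmod (q z))). split; auto. intros k hk.
    pose proof (Hlow k (Rlt_le_trans _ _ _ hk (Rmin_l _ _))).
    rewrite Cmod_opp, Cmod_inv, Cmod_mult by (apply Cmult_neq_0; auto; apply Hnz; auto).
    apply Rle_trans with (/ (Cmod (q z) * (Cmod (q z) / 2))).
    - apply Rinv_le_contravar; [nra|]. apply Rmult_le_compat_l; lra.
    - right. field. lra. }
  assert (A2 : small_o (fun k => L * k * ((q (z + k) - q z) / (q z * q z * q (z + k))))%C).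
  { apply small_o_quad. exists d, (Cmod L * (Cmod L + 1) * (2 / (Cmod (q z) ^ 3))).
    split; auto. intros k hk. pose proof (Hlow k (Rlt_le_trans _ _ _ hk (Rmin_l _ _))) as Hb.
    pose proof (Hlip k (Rlt_le_trans _ _ _ hk (Rmin_r _ _))) as He.
    rewrite Cmod_mult, Cmod_mult, Cmod_div, !Cmod_mult by (repeat apply Cmult_neq_0; auto).
    set (a := Cmod (q z)) in *. set (b := Cmod (q (z + k)%C)) in *.
    set (e := Cmod (q (z + k) - q z)%C) in *.
    pose proof (Cmod_ge_0 L). pose proof (Cmod_ge_0 k). pose proof (Cmod_ge_0 (q (z + k) - q z)%C).
    assert (Hi : / (a * a * b) <= 2 / a ^ 3).
    { replace (2 / a ^ 3) with (/ (a * a * (a / 2))) by (field; lra).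
      assert (0 < a * a) by nra.
      apply Rinv_le_contravar; [apply Rmult_lt_0_compat; lra|]. apply Rmult_le_compat_l; lra. }
    assert (Hq : e / (a * a * b) <= (Cmod L + 1) * Cmod k * (2 / a ^ 3)).
    { assert (0 < a * a * b) by (apply Rmult_lt_0_compat; nra).
      unfold Rdiv at 1. apply Rmult_le_compat; auto. left; apply Rinv_0_lt_compat; lra. }
    replace (Cmod L * (Cmod L + 1) * (2 / a ^ 3) * Cmod k * Cmod k)
      with ((Cmod L * Cmod k) * ((Cmod L + 1) * Cmod k * (2 / a ^ 3))) by ring.
    apply Rmult_le_compat_l; nra. }
  unfold has_cderiv. eapply (small_o_ext_loc _ _ d); [auto| |apply (small_o_plus _ _ A1 A2)].
  intros k hk. pose proof (Hnz k hk). simpl. field. split; auto.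
Qed.

(** * Integrals of complex-valued functions of a real variable *)

Lemma norm_C (x : C) : @norm R_AbsRing C_R_NormedModule x = Cmod x.
Proof.
  unfold norm; simpl; unfold prod_norm; simpl. unfold Cmod. f_equal.
  unfold norm; simpl; unfold abs; simpl.
  replace (Rabs (fst x) * (Rabs (fst x) * 1)) with (Rsqr (Rabs (fst x))) by (unfold Rsqr; ring).
  replace (Rabs (snd x) * (Rabs (snd x) * 1)) with (Rsqr (Rabs (snd x))) by (unfold Rsqr; ring).
  rewrite <- !Rsqr_abs. unfold Rsqr. ring.
Qed.

Lemma scal_C (x : C) (r : R) : @scal R_AbsRing C_R_NormedModule r x = (r * x)%C.
Proof. apply C_eq; simpl; unfold scal; simpl; unfold mult; simpl; ring. Qed.

Definition ccontinuous (f : R -> C) (x : R) := forall eps, 0 < eps -> exists delta, 0 < delta /\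
  forall y, Rabs (y - x) < delta -> Cmod (f y - f x) < eps.

Lemma ccontinuous_continuous f x : ccontinuous f x -> continuous f x.
Proof.
  intros H P [eps HP]. unfold filtermap.
  destruct (H eps (cond_pos eps)) as [d [hd Hd]].
  exists (mkposreal d hd). intros y Hy. apply HP.
  apply C_NormedModule_mixin_compat1. apply Hd. apply Hy.
Qed.

Lemma ccontinuous_ex_RInt f a b : a <= b -> (forall x, a <= x <= b -> ccontinuous f x) ->
  ex_RInt f a b.
Proof.
  intros hab H. apply (@ex_RInt_continuous C_R_CompleteNormedModule).
  intros z hz. apply ccontinuous_continuous, H. rewrite Rmin_left, Rmax_right in hz; auto.
Qed.

Lemma ccontinuous_const c x : ccontinuous (fun _ => c) x.
Proof.
  intros eps he; exists 1; split; [lra|]; intros.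
  replace (c - c)%C with C0 by ring. rewrite Cmod_0; lra.
Qed.

Lemma ccontinuous_mul f g x : ccontinuous f x -> ccontinuous g x ->
  ccontinuous (fun t => f t * g t)%C x.
Proof.
  intros Hf Hg eps he.
  set (M := Cmod (f x) + Cmod (g x) + 1).
  pose proof (Cmod_ge_0 (f x)). pose proof (Cmod_ge_0 (g x)).
  assert (hM : 1 <= M) by (unfold M; lra).
  set (e := Rmin 1 (eps / (3 * M))).
  assert (he' : 0 < e) by (apply Rmin_glb_lt; [lra|apply Rdiv_lt_0_compat; lra]).
  assert (he1 : e <= 1) by apply Rmin_l.
  assert (heM : e * M <= eps / 3).
  { apply Rle_trans with (eps / (3 * M) * M); [apply Rmult_le_compat_r; [lra|apply Rmin_r]|].
    right. field. lra. }
  destruct (Hf e he') as [d1 [h1 H1]]. destruct (Hg e he') as [d2 [h2 H2]].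
  exists (Rmin d1 d2); split; [apply Rmin_glb_lt; auto|].
  intros y hy.
  pose proof (H1 y (Rlt_le_trans _ _ _ hy (Rmin_l _ _))) as A1.
  pose proof (H2 y (Rlt_le_trans _ _ _ hy (Rmin_r _ _))) as A2.
  replace (f y * g y - f x * g x)%C
    with ((f y - f x) * (g y - g x) + (f y - f x) * g x + f x * (g y - g x))%C by ring.
  eapply Rle_lt_trans; [apply Cmod_triangle|].
  eapply Rle_lt_trans; [apply Rplus_le_compat_r, Cmod_triangle|]. rewrite !Cmod_mult.
  pose proof (Cmod_ge_0 (f y - f x)%C). pose proof (Cmod_ge_0 (g y - g x)%C).
  assert (Cmod (f y - f x)%C * Cmod (g y - g x)%C <= e * 1) by (apply Rmult_le_compat; lra).
  assert (Cmod (f y - f x)%C * Cmod (g x) <= e * M) by (apply Rmult_le_compat; unfold M; lra).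
  assert (Cmod (f x) * Cmod (g y - g x)%C <= M * e) by (apply Rmult_le_compat; unfold M; lra).
  nra.
Qed.

Lemma ccontinuous_cis x : ccontinuous cis x.
Proof.
  intros eps he. exists (eps / 2). split; [lra|]. intros y hy.
  eapply Rle_lt_trans; [apply cis_lipschitz|]. lra.
Qed.

Lemma ccontinuous_along_path q (g : R -> C) t0 K : 0 <= K ->
  (forall t, Cmod (g t - g t0) <= K * Rabs (t - t0)) ->
  (exists L, has_cderiv q (g t0) L) -> ccontinuous (fun t => q (g t)) t0.
Proof.
  intros hK Hg [L HL] eps he. destruct (cderiv_continuous q (g t0) L HL eps he) as [d [hd Hd]].
  exists (d / (K + 1)). split; [apply Rdiv_lt_0_compat; lra|].
  intros y hy. apply Hd. eapply Rle_lt_trans; [apply Hg|].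
  pose proof (Rabs_pos (y - t0)).
  apply Rle_lt_trans with ((K + 1) * Rabs (y - t0)); [nra|].
  apply Rmult_lt_reg_r with (/ (K + 1)); [apply Rinv_0_lt_compat; lra|].
  rewrite (Rmult_comm (K + 1)), Rmult_assoc, Rinv_r by lra. lra.
Qed.

Lemma is_RInt_Cmul (f : R -> C) a b l c :
  is_RInt f a b l -> is_RInt (fun t => c * f t)%C a b (c * l)%C.
Proof.
  intros H.
  pose proof (is_RInt_fct_extend_fst f a b l H) as H1.
  pose proof (is_RInt_fct_extend_snd f a b l H) as H2.
  change (c * l)%C with (fst c * fst l - snd c * snd l, fst c * snd l + snd c * fst l).
  apply is_RInt_fct_extend_pair; simpl.
  - apply (is_RInt_minus (V:=R_NormedModule) (fun t => fst c * fst (f t)) (fun t => snd c * snd (f t))).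
    + apply (is_RInt_scal (V:=R_NormedModule) _ _ _ _ _ H1).
    + apply (is_RInt_scal (V:=R_NormedModule) _ _ _ _ _ H2).
  - apply (is_RInt_plus (V:=R_NormedModule) (fun t => fst c * snd (f t)) (fun t => snd c * fst (f t))).
    + apply (is_RInt_scal (V:=R_NormedModule) _ _ _ _ _ H2).
    + apply (is_RInt_scal (V:=R_NormedModule) _ _ _ _ _ H1).
Qed.

Lemma is_RInt_Cplus (f g : R -> C) a b l1 l2 :
  is_RInt f a b l1 -> is_RInt g a b l2 -> is_RInt (fun t => f t + g t)%C a b (l1 + l2)%C.
Proof. intros H1 H2. apply (is_RInt_plus _ _ _ _ _ _ H1 H2). Qed.

Lemma is_RInt_Cminus (f g : R -> C) a b l1 l2 :
  is_RInt f a b l1 -> is_RInt g a b l2 -> is_RInt (fun t => f t - g t)%C a b (l1 - l2)%C.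
Proof. intros H1 H2. apply (is_RInt_minus _ _ _ _ _ _ H1 H2). Qed.

Lemma is_RInt_Cfv (f g : R -> C) a b (l l' : C) :
  (forall t, f t = g t) -> l = l' -> is_RInt f a b l -> is_RInt g a b l'.
Proof. intros E1 E2 H. subst. apply (is_RInt_ext f); auto. Qed.

Lemma is_RInt_Rfv (f g : R -> R) a b (l l' : R) :
  (forall t, f t = g t) -> l = l' -> is_RInt f a b l -> is_RInt g a b l'.
Proof. intros E1 E2 H. subst. apply (is_RInt_ext f); auto. Qed.

Lemma is_RInt_Cnorm (f : R -> C) a b l M :
  a <= b -> (forall t, a <= t <= b -> Cmod (f t) <= M) -> is_RInt f a b l -> Cmod l <= (b - a) * M.
Proof.
  intros hab HM H. rewrite <- norm_C. apply (norm_RInt_le_const f a b l M hab); auto.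
  intros; rewrite norm_C; auto.
Qed.

Lemma is_RInt_Cconst (c : C) a b : is_RInt (fun _ => c) a b (RtoC (b - a) * c)%C.
Proof. rewrite <- scal_C. apply (is_RInt_const (V:=C_R_NormedModule)). Qed.

Lemma is_RInt_conj (f : R -> C) a b (l : C) :
  is_RInt f a b l -> is_RInt (fun t => Cconj (f t)) a b (Cconj l).
Proof.
  intros H. apply is_RInt_fct_extend_pair; simpl.
  - apply (is_RInt_fct_extend_fst f a b l H).
  - apply (is_RInt_opp (V:=R_NormedModule) _ _ _ _ (is_RInt_fct_extend_snd f a b l H)).
Qed.

Lemma is_RInt_cis_lin m a b : m <> 0 ->
  is_RInt (fun t => cis (m * t)) a b ((cis (m * b) - cis (m * a)) / (Ci * m))%C.
Proof.
  intros hm.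
  assert (Hlin : forall x, continuity_pt (fun t => m * t) x).
  { intros x. apply derivable_continuous_pt. reg. }
  assert (Hre : is_RInt (fun t => cos (m * t)) a b (minus (sin (m * b) / m) (sin (m * a) / m))).
  { apply (is_RInt_derive (V:=R_CompleteNormedModule) (fun t => sin (m * t) / m)).
    - intros x _. auto_derive; auto. field; auto.
    - intros x _. apply continuity_pt_filterlim, (continuity_pt_comp (fun t => m * t)); [apply Hlin|apply continuity_cos]. }
  assert (Him : is_RInt (fun t => sin (m * t)) a b (minus (- cos (m * b) / m) (- cos (m * a) / m))).
  { apply (is_RInt_derive (V:=R_CompleteNormedModule) (fun t => - cos (m * t) / m)).
    - intros x _. auto_derive; auto. field; auto.
    - intros x _. apply continuity_pt_filterlim, (continuity_pt_comp (fun t => m * t)); [apply Hlin|apply continuity_sin]. }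
  replace ((cis (m * b) - cis (m * a)) / (Ci * m))%C
    with (minus (sin (m * b) / m) (sin (m * a) / m), minus (- cos (m * b) / m) (- cos (m * a) / m))
    by (unfold minus, plus, opp; apply C_eq; simpl; field; auto).
  apply is_RInt_fct_extend_pair; auto.
Qed.

Lemma is_RInt_id_C (c : C) a b : is_RInt (fun r => RtoC r * c)%C a b (RtoC ((b * b - a * a) / 2) * c)%C.
Proof.
  assert (H : is_RInt (fun r : R => r) a b ((b * b - a * a) / 2)).
  { replace ((b * b - a * a) / 2) with (minus ((fun r => r * r / 2) b) ((fun r => r * r / 2) a))
      by (unfold minus, plus, opp; simpl; field).
    apply (is_RInt_derive (V:=R_CompleteNormedModule) (fun r => r * r / 2)).
    - intros x _. auto_derive; auto. field.
    - intros x _. apply continuity_pt_filterlim, derivable_continuous_pt, derivable_pt_id. }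
  assert (H0 : is_RInt (fun _ => 0) a b 0).
  { pose proof (is_RInt_const (V:=R_NormedModule) a b 0) as H0.
    unfold scal in H0; simpl in H0; unfold mult in H0; simpl in H0. rewrite Rmult_0_r in H0. exact H0. }
  apply (is_RInt_Cfv (fun t => c * (t, 0%R))%C _ _ _ (c * (((b * b - a * a) / 2)%R, 0%R))%C);
    [intros t; apply C_eq; simpl; ring|apply C_eq; simpl; ring|].
  apply is_RInt_Cmul, is_RInt_fct_extend_pair; auto.
Qed.

(** * Integrals over the boundary of an annular sector *)

(** The sector {r e^{it} : a <= r <= b, al <= t <= be} is bounded by two arcs
    t |-> r e^{it} (r = a, b) and two segments r |-> r e^{iθ} (θ = al, be). *)
Definition arc_integrand (q : C -> C) (r t : R) : C := (q (RtoC r * cis t) * (Ci * RtoC r * cis t))%C.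
Definition ray_integrand (q : C -> C) (th r : R) : C := (q (RtoC r * cis th) * cis th)%C.
Definition arc_int q r al be : C := RInt (V:=C_R_CompleteNormedModule) (arc_integrand q r) al be.
Definition ray_int q th a b : C := RInt (V:=C_R_CompleteNormedModule) (ray_integrand q th) a b.

Definition sector_int q a b al be : C :=
  (arc_int q b al be - arc_int q a al be + ray_int q al a b - ray_int q be a b)%C.

Definition cdiff_on_annulus (q : C -> C) (a0 b0 : R) : Prop :=
  forall w, a0 <= Cmod w <= b0 -> exists L, has_cderiv q w L.

Lemma polar_arc_lipschitz r t0 t : Cmod (RtoC r * cis t - RtoC r * cis t0)%C <= (2 * Rabs r) * Rabs (t - t0).
Proof.
  replace (RtoC r * cis t - RtoC r * cis t0)%C with (RtoC r * (cis t - cis t0))%C by ring.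
  rewrite Cmod_mult, Cmod_R. pose proof (cis_lipschitz t0 t). pose proof (Rabs_pos r). nra.
Qed.

Lemma polar_ray_lipschitz th r0 r : Cmod (RtoC r * cis th - RtoC r0 * cis th)%C <= 1 * Rabs (r - r0).
Proof.
  replace (RtoC r * cis th - RtoC r0 * cis th)%C with (RtoC (r - r0) * cis th)%C by (apply C_eq; simpl; ring).
  rewrite Cmod_polar. lra.
Qed.

Section SectorIntegrals.
Variable q : C -> C.
Variables a0 b0 : R.
Hypothesis ha0 : 0 < a0.
Hypothesis HD : cdiff_on_annulus q a0 b0.

Lemma ex_arc_int r al be : a0 <= r <= b0 -> al <= be ->
  ex_RInt (V:=C_R_CompleteNormedModule) (arc_integrand q r) al be.
Proof.
  intros hr hab. apply ccontinuous_ex_RInt; auto. intros t _. unfold arc_integrand.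
  apply ccontinuous_mul.
  - apply (ccontinuous_along_path q (fun t => RtoC r * cis t)%C t (2 * Rabs r)).
    + pose proof (Rabs_pos r); lra.
    + intros; apply polar_arc_lipschitz.
    + apply HD. rewrite Cmod_polar, Rabs_right; lra.
  - apply ccontinuous_mul; [apply ccontinuous_const|apply ccontinuous_cis].
Qed.

Lemma ex_ray_int th a b : a0 <= a -> a <= b -> b <= b0 ->
  ex_RInt (V:=C_R_CompleteNormedModule) (ray_integrand q th) a b.
Proof.
  intros h1 h2 h3. apply ccontinuous_ex_RInt; auto. intros r hr. unfold ray_integrand.
  apply ccontinuous_mul; [|apply ccontinuous_const].
  apply (ccontinuous_along_path q (fun r => RtoC r * cis th)%C r 1); [lra| |].
  - intros; apply polar_ray_lipschitz.
  - apply HD. rewrite Cmod_polar, Rabs_right; lra.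
Qed.

Lemma arc_int_correct r al be : a0 <= r <= b0 -> al <= be ->
  is_RInt (arc_integrand q r) al be (arc_int q r al be).
Proof. intros. apply (RInt_correct (V:=C_R_CompleteNormedModule)), ex_arc_int; auto. Qed.

Lemma ray_int_correct th a b : a0 <= a -> a <= b -> b <= b0 ->
  is_RInt (ray_integrand q th) a b (ray_int q th a b).
Proof. intros. apply (RInt_correct (V:=C_R_CompleteNormedModule)), ex_ray_int; auto. Qed.

(** Bisecting a sector into four quarters splits its boundary integral,
    the interior edges cancelling. *)
Lemma sector_int_split a m b al mu be :
  a0 <= a -> a <= m -> m <= b -> b <= b0 -> al <= mu -> mu <= be ->
  sector_int q a b al be =
  (sector_int q a m al mu + sector_int q m b al mu + sector_int q a m mu be + sector_int q m b mu be)%C.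
Proof.
  intros. unfold sector_int, arc_int, ray_int.
  rewrite <- !(RInt_Chasles (V:=C_R_CompleteNormedModule) (arc_integrand q _) al mu be)
    by (apply ex_arc_int; lra).
  rewrite <- !(RInt_Chasles (V:=C_R_CompleteNormedModule) (ray_integrand q _) a m b)
    by (apply ex_ray_int; lra).
  change plus with Cplus. ring.
Qed.

End SectorIntegrals.

Lemma cdiff_on_annulus_minus q p a0 b0 : cdiff_on_annulus q a0 b0 -> cdiff_on_annulus p a0 b0 ->
  cdiff_on_annulus (fun w => q w - p w)%C a0 b0.
Proof.
  intros Hq Hp w hw. destruct (Hq w hw) as [L1 H1]. destruct (Hp w hw) as [L2 H2].
  eexists. apply (cderiv_minus _ _ _ _ _ H1 H2).
Qed.

Lemma sector_int_minus q p a0 a b b0 al be : 0 < a0 -> a0 <= a -> a <= b -> b <= b0 -> al <= be ->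
  cdiff_on_annulus q a0 b0 -> cdiff_on_annulus p a0 b0 ->
  sector_int (fun w => q w - p w)%C a b al be = (sector_int q a b al be - sector_int p a b al be)%C.
Proof.
  intros ha0 h1 h2 h3 h4 Hq Hp.
  assert (A : forall r, a0 <= r <= b0 -> arc_int (fun w => q w - p w)%C r al be = (arc_int q r al be - arc_int p r al be)%C).
  { intros r hr. apply (is_RInt_unique (V:=C_R_CompleteNormedModule)).
    eapply (is_RInt_Cfv (fun t => arc_integrand q r t - arc_integrand p r t)%C);
      [intros t; unfold arc_integrand; ring|reflexivity|].
    apply is_RInt_Cminus; apply (arc_int_correct _ a0 b0); auto. }
  assert (R0 : forall th, ray_int (fun w => q w - p w)%C th a b = (ray_int q th a b - ray_int p th a b)%C).
  { intros th. apply (is_RInt_unique (V:=C_R_CompleteNormedModule)).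
    eapply (is_RInt_Cfv (fun r => ray_integrand q th r - ray_integrand p th r)%C);
      [intros r; unfold ray_integrand; ring|reflexivity|].
    apply is_RInt_Cminus; apply (ray_int_correct _ a0 b0); auto. }
  unfold sector_int. rewrite !A, !R0 by lra. ring.
Qed.

(** Affine functions have primitives, so their boundary integral vanishes. *)
Lemma sector_int_affine c L a b al be : sector_int (fun w => c + L * w)%C a b al be = C0.
Proof.
  assert (A : forall r, arc_int (fun w => c + L * w)%C r al be =
     (RtoC r * c * (cis be - cis al) + RtoC (r * r / 2) * L * (cis be * cis be - cis al * cis al))%C).
  { intros r. apply (is_RInt_unique (V:=C_R_CompleteNormedModule)).
    pose proof (is_RInt_cis_lin 1 al be ltac:(lra)) as H1.
    pose proof (is_RInt_cis_lin 2 al be ltac:(lra)) as H2.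
    assert (Hd : forall t, cis (2 * t) = (cis t * cis t)%C)
      by (intros t; rewrite <- cis_add; f_equal; ring).
    eapply is_RInt_Cfv; [| |exact (is_RInt_Cplus _ _ _ _ _ _ (is_RInt_Cmul _ _ _ _ (Ci * RtoC r * c)%C H1)
       (is_RInt_Cmul _ _ _ _ (Ci * RtoC (r * r) * L)%C H2))].
    - intros t. unfold arc_integrand. rewrite Hd, Rmult_1_l. apply C_eq; simpl; ring.
    - rewrite !Hd, !Rmult_1_l. apply C_eq; simpl; field. }
  assert (R0 : forall th, ray_int (fun w => c + L * w)%C th a b =
     (RtoC (b - a) * (c * cis th) + RtoC ((b * b - a * a) / 2) * (L * cis th * cis th))%C).
  { intros th. apply (is_RInt_unique (V:=C_R_CompleteNormedModule)).
    eapply is_RInt_Cfv; [| |exact (is_RInt_Cplus _ _ _ _ _ _ (is_RInt_Cconst (c * cis th)%C a b)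
       (is_RInt_id_C (L * cis th * cis th)%C a b))].
    - intros r. unfold ray_integrand. apply C_eq; simpl; ring.
    - reflexivity. }
  unfold sector_int. rewrite !A, !R0. apply C_eq; simpl; field.
Qed.

Lemma sector_int_bound g a0 a b b0 al be M : 0 < a0 -> a0 <= a -> a <= b -> b <= b0 -> b0 <= 1 ->
  al <= be -> cdiff_on_annulus g a0 b0 ->
  (forall r t, a <= r <= b -> al <= t <= be -> Cmod (g (RtoC r * cis t)%C) <= M) ->
  Cmod (sector_int g a b al be) <= 2 * ((b - a) + (be - al)) * M.
Proof.
  intros ha0 h1 h2 h3 h4 h5 Hg HM.
  assert (hM : 0 <= M) by (pose proof (HM a al ltac:(lra) ltac:(lra)); pose proof (Cmod_ge_0 (g (RtoC a * cis al)%C)); lra).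
  assert (HA : forall r, a <= r <= b -> Cmod (arc_int g r al be) <= (be - al) * M).
  { intros r hr. eapply is_RInt_Cnorm; [lra| |apply (arc_int_correct g a0 b0); auto; lra].
    intros t ht. unfold arc_integrand.
    replace (Ci * RtoC r * cis t)%C with (Ci * (RtoC r * cis t))%C by ring.
    rewrite Cmod_mult, Cmod_mult, Cmod_polar, Cmod_Ci, Rabs_right by lra.
    pose proof (HM r t hr ht). pose proof (Cmod_ge_0 (g (RtoC r * cis t)%C)). nra. }
  assert (HR : forall th, al <= th <= be -> Cmod (ray_int g th a b) <= (b - a) * M).
  { intros th hth. eapply is_RInt_Cnorm; [lra| |apply (ray_int_correct g a0 b0); auto].
    intros r hr. unfold ray_integrand. rewrite Cmod_mult, Cmod_cis, Rmult_1_r. apply HM; lra. }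
  unfold sector_int.
  pose proof (HA b ltac:(lra)). pose proof (HA a ltac:(lra)).
  pose proof (HR al ltac:(lra)). pose proof (HR be ltac:(lra)).
  pose proof (Cmod_minus_le (arc_int g b al be - arc_int g a al be + ray_int g al a b) (ray_int g be a b)).
  pose proof (Cmod_triangle (arc_int g b al be - arc_int g a al be) (ray_int g al a b)).
  pose proof (Cmod_minus_le (arc_int g b al be) (arc_int g a al be)).
  lra.
Qed.

Lemma sector_diameter a b al be r t rs ts : 0 <= a -> b <= 1 ->
  a <= r <= b -> al <= t <= be -> a <= rs <= b -> al <= ts <= be ->
  Cmod (RtoC r * cis t - RtoC rs * cis ts)%C <= (b - a) + 2 * (be - al).
Proof.
  intros ha hb hr ht hrs hts.
  replace (RtoC r * cis t - RtoC rs * cis ts)%C with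
    ((RtoC r * cis t - RtoC rs * cis t) + (RtoC rs * cis t - RtoC rs * cis ts))%C by ring.
  eapply Rle_trans; [apply Cmod_triangle|].
  pose proof (polar_ray_lipschitz t rs r). pose proof (polar_arc_lipschitz rs ts t).
  assert (Rabs (r - rs) <= b - a) by (apply Rabs_le; lra).
  assert (Rabs rs <= 1) by (rewrite Rabs_right; lra).
  assert (Rabs (t - ts) <= be - al) by (apply Rabs_le; lra).
  pose proof (Rabs_pos rs). pose proof (Rabs_pos (t - ts)). nra.
Qed.

(** Goursat's local estimate: near a point of differentiability z0 of the
    sector, q differs from an affine function by eps |w - z0|, so the boundary
    integral is O(eps * size^2). *)
Lemma sector_int_local q a0 b0 a b al be rs ts L eps delta :
  0 < a0 -> b0 <= 1 -> cdiff_on_annulus q a0 b0 ->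
  a0 <= a -> a <= rs -> rs <= b -> b <= b0 -> al <= ts -> ts <= be -> 0 <= eps ->
  (forall k, Cmod k < delta ->
     Cmod (q (RtoC rs * cis ts + k) - q (RtoC rs * cis ts) - L * k)%C <= eps * Cmod k) ->
  (b - a) + 2 * (be - al) < delta ->
  Cmod (sector_int q a b al be) <= 4 * eps * (((b - a) + (be - al)) * ((b - a) + (be - al))).
Proof.
  intros ha0 hb0 HD h1 h2 h3 h4 h5 h6 he Hs Hdel.
  set (z0 := (RtoC rs * cis ts)%C) in *.
  set (c := (q z0 - L * z0)%C).
  set (S0 := (b - a) + 2 * (be - al)).
  assert (Hp : cdiff_on_annulus (fun w => c + L * w)%C a0 b0).
  { intros w _. eexists. apply (cderiv_plus _ _ _ _ _ (cderiv_const c w) (cderiv_scal L _ w _ (cderiv_id w))). }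
  assert (Hq : sector_int q a b al be = sector_int (fun w => q w - (c + L * w))%C a b al be).
  { rewrite (sector_int_minus q _ a0 a b b0) by (auto; lra). rewrite sector_int_affine. ring. }
  assert (Hclose : forall r t, a <= r <= b -> al <= t <= be ->
     Cmod (q (RtoC r * cis t) - (c + L * (RtoC r * cis t)))%C <= eps * S0).
  { intros r t hr ht. set (w := (RtoC r * cis t)%C).
    assert (hw : Cmod (w - z0) <= S0) by (apply sector_diameter; lra).
    pose proof (Hs (w - z0)%C ltac:(unfold S0 in hw; lra)) as H0.
    replace (z0 + (w - z0))%C with w in H0 by ring.
    replace (q w - (c + L * w))%C with (q w - q z0 - L * (w - z0))%C by (unfold c; ring).
    eapply Rle_trans; [apply H0|]. apply Rmult_le_compat_l; auto. }
  rewrite Hq. eapply Rle_trans.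
  { apply (sector_int_bound _ a0 a b b0); auto; try lra. apply cdiff_on_annulus_minus; auto. }
  assert (S0 <= 2 * ((b - a) + (be - al))) by (unfold S0; lra).
  assert (0 <= (b - a) + (be - al)) by lra.
  assert (eps * S0 <= eps * (2 * ((b - a) + (be - al)))) by (apply Rmult_le_compat_l; lra).
  nra.
Qed.

(** * Goursat's theorem for annular sectors *)

Lemma nested_intervals (u v : nat -> R) :
  (forall n, u n <= u (S n)) -> (forall n, v (S n) <= v n) -> (forall n, u n <= v n) ->
  exists x, forall n, u n <= x <= v n.
Proof.
  intros Hu Hv Huv.
  assert (Hle : forall m n, u m <= v n).
  { assert (Hu' : forall m k, u m <= u (m + k)%nat).
    { intros m k; induction k; [rewrite Nat.add_0_r; lra|].
      rewrite Nat.add_succ_r; specialize (Hu (m + k)%nat); lra. }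
    assert (Hv' : forall m k, v (m + k)%nat <= v m).
    { intros m k; induction k; [rewrite Nat.add_0_r; lra|].
      rewrite Nat.add_succ_r; specialize (Hv (m + k)%nat); lra. }
    intros m n. destruct (Nat.le_ge_cases m n) as [h|h].
    - replace n with (m + (n - m))%nat by lia. specialize (Hu' m (n - m)%nat). specialize (Huv (m + (n - m))%nat). lra.
    - replace m with (n + (m - n))%nat by lia. specialize (Hv' n (m - n)%nat). specialize (Huv (n + (m - n))%nat). lra. }
  destruct (growing_cv u Hu) as [x hx].
  { exists (v O). intros y [n ->]. apply Hle. }
  exists x. intros n. split.
  - apply (growing_ineq u x Hu hx).
  - destruct (Rle_or_lt x (v n)) as [h|h]; auto. exfalso.
    destruct (hx (x - v n)) as [N HN]; [lra|].
    specialize (HN N (Nat.le_refl N)). specialize (Hle N n).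
    unfold R_dist in HN. apply Rabs_lt_between in HN. lra.
Qed.

Lemma small_pow2 W d : 0 < d -> exists n, W / 2 ^ n < d.
Proof.
  intros hd. destruct (Rle_or_lt W 0) as [hW|hW].
  - exists 0%nat. simpl. lra.
  - destruct (INR_unbounded (W / d)) as [n hn]. exists n.
    assert (Hn : INR n <= 2 ^ n).
    { clear hn. induction n; [simpl; lra|]. rewrite S_INR. simpl.
      assert (1 <= 2 ^ n) by (apply pow_R1_Rle; lra). lra. }
    assert (0 < 2 ^ n) by (apply pow_lt; lra).
    apply Rmult_lt_reg_r with (2 ^ n); auto. unfold Rdiv. rewrite Rmult_assoc, Rinv_l by lra.
    assert (W < d * INR n).
    { apply Rmult_lt_reg_r with (/ d); [apply Rinv_0_lt_compat; auto|].
      rewrite (Rmult_comm d), Rmult_assoc, Rinv_r by lra. lra. }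
    nra.
Qed.

Record sector := mk_sector { s_a : R; s_b : R; s_al : R; s_be : R }.

Definition s_size (s : sector) := (s_b s - s_a s) + (s_be s - s_al s).

Definition quarter (outer upper : bool) (s : sector) : sector :=
  let mr := (s_a s + s_b s) / 2 in let mt := (s_al s + s_be s) / 2 in
  mk_sector (if outer then mr else s_a s) (if outer then s_b s else mr)
            (if upper then mt else s_al s) (if upper then s_be s else mt).

Section Bisection.
Variable q : C -> C.
Variables a0 b0 : R.
Hypothesis ha0 : 0 < a0.
Hypothesis hb0 : b0 <= 1.
Hypothesis HD : cdiff_on_annulus q a0 b0.
Variable kap : R.
Hypothesis hkap : 0 < kap.

Definition s_int s := sector_int q (s_a s) (s_b s) (s_al s) (s_be s).

Definition bad s := kap * (s_size s * s_size s) < Cmod (s_int s).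

Definition valid s := a0 <= s_a s /\ s_a s <= s_b s /\ s_b s <= b0 /\ s_al s <= s_be s.

Definition next s :=
  if Rlt_dec (kap * (s_size (quarter false false s) * s_size (quarter false false s)))
             (Cmod (s_int (quarter false false s))) then quarter false false s else
  if Rlt_dec (kap * (s_size (quarter true false s) * s_size (quarter true false s)))
             (Cmod (s_int (quarter true false s))) then quarter true false s else
  if Rlt_dec (kap * (s_size (quarter false true s) * s_size (quarter false true s)))
             (Cmod (s_int (quarter false true s))) then quarter false true s else
  quarter true true s.

Definition halves s s' := valid s' /\ s_a s <= s_a s' /\ s_b s' <= s_b s /\
  s_al s <= s_al s' /\ s_be s' <= s_be s /\
  s_b s' - s_a s' = (s_b s - s_a s) / 2 /\ s_be s' - s_al s' = (s_be s - s_al s) / 2.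

Lemma next_halves s : valid s -> halves s (next s).
Proof.
  intros [h1 [h2 [h3 h4]]].
  assert (Hq : forall o u, halves s (quarter o u s))
    by (intros [|] [|]; unfold halves, valid, quarter; simpl; repeat split; lra).
  unfold next. repeat destruct Rlt_dec; auto.
Qed.

(** If all four quarters were good, the sector itself would be good. *)
Lemma next_bad s : valid s -> bad s -> bad (next s).
Proof.
  intros [v1 [v2 [v3 v4]]] hb.
  assert (Hsplit : s_int s = (s_int (quarter false false s) + s_int (quarter true false s) +
                              s_int (quarter false true s) + s_int (quarter true true s))%C)
    by (unfold s_int, quarter; simpl; apply (sector_int_split q a0 b0 ha0 HD); lra).
  assert (Hgood : forall o u, ~ bad (quarter o u s) -> Cmod (s_int (quarter o u s)) <= kap * (s_size s * s_size s) / 4).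
  { intros o u hn. apply Rnot_lt_le in hn.
    replace (s_size (quarter o u s)) with (s_size s / 2) in hn
      by (destruct o, u; unfold s_size, quarter; simpl; field). lra. }
  unfold next. destruct Rlt_dec as [h1|h1]; [exact h1|].
  destruct Rlt_dec as [h2|h2]; [exact h2|]. destruct Rlt_dec as [h3|h3]; [exact h3|].
  destruct (Rlt_dec (kap * (s_size (quarter true true s) * s_size (quarter true true s)))
                    (Cmod (s_int (quarter true true s)))) as [h4|h4]; [exact h4|].
  exfalso. unfold bad in hb. rewrite Hsplit in hb.
  pose proof (Hgood false false h1). pose proof (Hgood true false h2).
  pose proof (Hgood false true h3). pose proof (Hgood true true h4).
  pose proof (Cmod_triangle (s_int (quarter false false s) + s_int (quarter true false s) +
                             s_int (quarter false true s)) (s_int (quarter true true s))).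
  pose proof (Cmod_triangle (s_int (quarter false false s) + s_int (quarter true false s))
                            (s_int (quarter false true s))).
  pose proof (Cmod_triangle (s_int (quarter false false s)) (s_int (quarter true false s))).
  lra.
Qed.

Fixpoint bisect (s0 : sector) (n : nat) : sector :=
  match n with O => s0 | S m => next (bisect s0 m) end.

Lemma bisect_props s0 : valid s0 -> forall n, valid (bisect s0 n) /\
  halves (bisect s0 n) (bisect s0 (S n)) /\
  s_b (bisect s0 n) - s_a (bisect s0 n) = (s_b s0 - s_a s0) / 2 ^ n /\
  s_be (bisect s0 n) - s_al (bisect s0 n) = (s_be s0 - s_al s0) / 2 ^ n.
Proof.
  intros hv n. induction n as [|n [IH1 [IH2 [IH3 IH4]]]].
  - simpl. repeat split; try (apply next_halves; auto); try field; apply hv.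
  - destruct IH2 as [v [_ [_ [_ [_ [w1 w2]]]]]].
    split; [exact v|]. split; [apply next_halves; exact v|].
    split; [rewrite w1, IH3|rewrite w2, IH4]; simpl; field; apply pow_nonzero; lra.
Qed.

(** No valid sector is bad: otherwise the nested bad quarters shrink to a
    point z0 where the local estimate contradicts badness. *)
Lemma not_bad s0 : valid s0 -> ~ bad s0.
Proof.
  intros hv hb.
  assert (Hbad : forall n, bad (bisect s0 n)).
  { induction n; auto. apply next_bad; auto. apply (bisect_props s0 hv n). }
  assert (Hr : exists rs, forall n, s_a (bisect s0 n) <= rs <= s_b (bisect s0 n)).
  { apply nested_intervals; intros n; destruct (bisect_props s0 hv n) as [[? [? _]] [[_ [? [? _]]] _]]; lra. }
  assert (Ht : exists ts, forall n, s_al (bisect s0 n) <= ts <= s_be (bisect s0 n)).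
  { apply nested_intervals; intros n;
      destruct (bisect_props s0 hv n) as [[_ [_ [_ ?]]] [[_ [_ [_ [? [? _]]]]] _]]; lra. }
  destruct Hr as [rs Hrs]. destruct Ht as [ts Hts].
  destruct hv as [v1 [v2 [v3 v4]]]. pose proof (Hrs O) as R0. simpl in R0.
  destruct (HD (RtoC rs * cis ts)%C) as [L HL]; [rewrite Cmod_polar, Rabs_right; lra|].
  destruct (HL (kap / 8)) as [d [hd Hd]]; [lra|].
  destruct (small_pow2 ((s_b s0 - s_a s0) + 2 * (s_be s0 - s_al s0)) d hd) as [n hn].
  destruct (bisect_props s0 (conj v1 (conj v2 (conj v3 v4))) n) as [[w1 [_ [w3 _]]] [_ [e1 e2]]].
  pose proof (Hrs n) as Rn. pose proof (Hts n) as Tn. simpl in Rn, Tn.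
  assert (Hsmall : s_b (bisect s0 n) - s_a (bisect s0 n) + 2 * (s_be (bisect s0 n) - s_al (bisect s0 n)) < d).
  { rewrite e1, e2. assert (0 < 2 ^ n) by (apply pow_lt; lra).
    replace ((s_b s0 - s_a s0) / 2 ^ n + 2 * ((s_be s0 - s_al s0) / 2 ^ n)) with
      ((s_b s0 - s_a s0 + 2 * (s_be s0 - s_al s0)) / 2 ^ n) by (field; lra). auto. }
  pose proof (sector_int_local q a0 b0 _ _ _ _ rs ts L (kap / 8) d ha0 hb0 HD
    w1 (proj1 Rn) (proj2 Rn) w3 (proj1 Tn) (proj2 Tn) ltac:(lra) Hd Hsmall) as Hl.
  specialize (Hbad n). unfold bad, s_int, s_size in Hbad.
  set (X := s_b (bisect s0 n) - s_a (bisect s0 n) + (s_be (bisect s0 n) - s_al (bisect s0 n))) in *.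
  assert (0 <= kap * (X * X)) by (apply Rmult_le_pos; nra). lra.
Qed.

End Bisection.

Lemma goursat q a0 b0 al be : 0 < a0 -> a0 <= b0 -> b0 <= 1 -> al <= be ->
  cdiff_on_annulus q a0 b0 -> sector_int q a0 b0 al be = C0.
Proof.
  intros h1 h2 h3 h4 HD.
  set (s0 := mk_sector a0 b0 al be).
  assert (hv : valid a0 b0 s0) by (unfold valid, s0; simpl; repeat split; lra).
  set (G := Cmod (sector_int q a0 b0 al be)). set (y := s_size s0 * s_size s0).
  assert (Hk : forall kap, 0 < kap -> G <= kap * y).
  { intros kap hk. apply Rnot_lt_le, (not_bad q a0 b0 h1 h3 HD kap hk s0 hv). }
  apply Cmod_eq_0. pose proof (Cmod_ge_0 (sector_int q a0 b0 al be)). fold G in H |- *.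
  destruct (Req_dec G 0) as [E0|E0]; auto. exfalso.
  assert (0 <= y) by (unfold y; nra).
  specialize (Hk (G / (2 * (y + 1))) ltac:(apply Rdiv_lt_0_compat; lra)).
  assert (E1 : G / (2 * (y + 1)) * y = G / 2 - G / (2 * (y + 1))) by (field; lra).
  assert (0 < G / (2 * (y + 1))) by (apply Rdiv_lt_0_compat; lra).
  lra.
Qed.

(** * Cauchy's theorem on circles and its corollaries *)

Definition circle_int q r := arc_int q r 0 (2 * PI).

(** The circle integral does not depend on the radius in an annulus of
    differentiability: apply Goursat to the sector [s, r] x [0, 2π], whose
    two radial edges coincide. *)
Lemma circle_int_radius_invariant q s r : 0 < s <= r -> r <= 1 -> cdiff_on_annulus q s r ->
  circle_int q r = circle_int q s.
Proof.
  intros hs hr HD. pose proof PI_RGT_0.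
  pose proof (goursat q s r 0 (2 * PI) ltac:(lra) ltac:(lra) ltac:(lra) ltac:(lra) HD) as G.
  unfold sector_int in G.
  assert (Hray : ray_int q 0 s r = ray_int q (2 * PI) s r) by (unfold ray_int, ray_integrand; rewrite cis_2PI, cis_0; reflexivity).
  rewrite Hray in G. unfold circle_int.
  replace (arc_int q r 0 (2 * PI)) with
    ((arc_int q r 0 (2 * PI) - arc_int q s 0 (2 * PI) + ray_int q (2 * PI) s r - ray_int q (2 * PI) s r)
     + arc_int q s 0 (2 * PI))%C by ring.
  rewrite G. ring.
Qed.

Lemma Cmod_small_0 (x : C) : (forall eps, 0 < eps -> Cmod x <= eps) -> x = C0.
Proof.
  intros H. apply Cmod_eq_0. pose proof (Cmod_ge_0 x).
  destruct (Req_dec (Cmod x) 0); auto. specialize (H (Cmod x / 2)). lra.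
Qed.

Theorem cauchy_circle q rho0 : 0 < rho0 -> rho0 <= 1 ->
  (forall w, 0 < Cmod w < rho0 -> exists L, has_cderiv q w L) ->
  (forall eps, 0 < eps -> exists delta, 0 < delta /\
     forall w, 0 < Cmod w < delta -> Cmod (w * q w)%C <= eps) ->
  forall r, 0 < r < rho0 -> circle_int q r = C0.
Proof.
  intros h0 h1 HD Hlim r hr. pose proof PI_RGT_0.
  apply Cmod_small_0. intros eps he.
  destruct (Hlim (eps / (2 * PI))) as [d [hd Hd]]; [apply Rdiv_lt_0_compat; lra|].
  set (s := Rmin r (d / 2)).
  assert (hs : 0 < s <= r) by (split; [apply Rmin_glb_lt; lra | apply Rmin_l]).
  assert (hsd : s < d) by (apply Rle_lt_trans with (d / 2); [apply Rmin_r|lra]).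
  rewrite (circle_int_radius_invariant q s r hs ltac:(lra)) by (intros w hw; apply HD; lra).
  replace eps with ((2 * PI - 0) * (eps / (2 * PI))) by (field; lra).
  eapply is_RInt_Cnorm; [lra| |apply (arc_int_correct q s s); try lra].
  - intros t ht. unfold arc_integrand.
    replace (q (RtoC s * cis t) * (Ci * RtoC s * cis t))%C with (Ci * ((RtoC s * cis t) * q (RtoC s * cis t)))%C by ring.
    rewrite Cmod_mult, Cmod_Ci, Rmult_1_l. apply Hd. rewrite Cmod_polar, Rabs_right; lra.
  - intros w hw; apply HD; lra.
Qed.

Fixpoint taylor_poly (c : nat -> C) (k : nat) (w : C) : C :=
  match k with O => c O | S m => (taylor_poly c m w + c (S m) * w ^ S m)%C end.

Lemma cderiv_taylor_poly c k w : exists L, has_cderiv (taylor_poly c k) w L.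
Proof.
  induction k as [|k [L HL]].
  - exists C0. exact (cderiv_const (c O) w).
  - eexists. exact (cderiv_plus _ (fun w => c (S k) * w ^ S k)%C w _ _ HL
                      (cderiv_scal (c (S k)) _ w _ (cderiv_pow k w))).
Qed.

Definition taylor_o (h : C -> C) (c : nat -> C) (k : nat) :=
  forall eps, 0 < eps -> exists delta, 0 < delta /\
    forall w, Cmod w < delta -> Cmod (h w - taylor_poly c k w)%C <= eps * Cmod w ^ k.

Lemma is_RInt_monomial r j k : (j <= k)%nat ->
  is_RInt (fun t => (RtoC r * cis t) ^ j * cis (- t) ^ k)%C 0 (2 * PI)
    (if Nat.eqb j k then RtoC (2 * PI * r ^ k) else C0).
Proof.
  intros hjk. pose proof PI_RGT_0.
  assert (Hf : forall t, ((RtoC r * cis t) ^ j * cis (- t) ^ k)%C = (RtoC (r ^ j) * cis ((- INR (k - j)) * t))%C).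
  { intros t. rewrite Cpow_mult_l, RtoC_pow. replace (- INR (k - j) * t) with (INR (k - j) * (- t)) by ring.
    rewrite cis_nat. replace k with (j + (k - j))%nat at 1 by lia. rewrite Cpow_add_r.
    pose proof (cis_neq0 t). rewrite cis_opp, Cpow_inv by auto.
    field. apply Cpow_nz; auto. }
  destruct (Nat.eqb_spec j k) as [e|e].
  - subst. apply (is_RInt_Cfv (fun _ => RtoC (r ^ k) * C1)%C _ _ _ (RtoC (2 * PI - 0) * (RtoC (r ^ k) * C1))%C).
    + intros t. rewrite Hf. replace (k - k)%nat with 0%nat by lia. simpl INR.
      replace (- 0 * t) with 0 by ring. rewrite cis_0. reflexivity.
    + apply C_eq; simpl; ring.
    + apply is_RInt_Cconst.
  - set (m := - INR (k - j)).
    assert (hm : m <> 0) by (unfold m; assert (0 < INR (k - j)) by (apply lt_0_INR; lia); lra).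
    eapply is_RInt_Cfv; [intros t; symmetry; apply Hf| |exact (is_RInt_Cmul _ _ _ _ (RtoC (r ^ j)) (is_RInt_cis_lin m 0 (2 * PI) hm))].
    replace (m * 0) with 0 by ring.
    replace (m * (2 * PI)) with (- (INR (k - j) * (2 * PI))) by (unfold m; ring).
    rewrite cis_opp, cis_2PI_nat, cis_0. apply C_eq; simpl; field; auto.
Qed.

Lemma is_RInt_taylor_poly c r k m : (m <= k)%nat ->
  is_RInt (fun t => taylor_poly c m (RtoC r * cis t) * cis (- t) ^ k)%C 0 (2 * PI)
    (if Nat.eqb m k then RtoC (2 * PI * r ^ k) * c k else C0)%C.
Proof.
  induction m as [|m IH]; intros hm.
  - eapply is_RInt_Cfv; [| |exact (is_RInt_Cmul _ _ _ _ (c O) (is_RInt_monomial r 0 k hm))].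
    + intros t; simpl. ring.
    + destruct (Nat.eqb_spec 0 k) as [e|e]; subst; simpl; ring.
  - pose proof (IH ltac:(lia)) as H1.
    pose proof (is_RInt_Cmul _ _ _ _ (c (S m)) (is_RInt_monomial r (S m) k hm)) as H2.
    eapply is_RInt_Cfv; [| |exact (is_RInt_Cplus _ _ _ _ _ _ H1 H2)].
    + intros t; simpl. ring.
    + destruct (Nat.eqb_spec m k) as [e|e]; [lia|].
      destruct (Nat.eqb_spec (S m) k) as [e'|e']; subst; ring.
Qed.

Lemma cauchy_coefficient h rho0 c k : 0 < rho0 -> rho0 <= 1 ->
  (forall w, Cmod w < rho0 -> exists L, has_cderiv h w L) -> taylor_o h c k ->
  forall r, 0 < r < rho0 ->
  is_RInt (fun t => h (RtoC r * cis t) * cis (- t) ^ k)%C 0 (2 * PI) (RtoC (2 * PI * r ^ k) * c k)%C.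
Proof.
  intros h0 h1 Hh Ho r hr.
  (* q(w) = (h(w) - T_k(w)) / w^{k+1} satisfies the hypotheses of Cauchy's theorem. *)
  set (q := fun w => ((h w - taylor_poly c k w) * / (w ^ S k))%C).
  assert (HDq : forall w, 0 < Cmod w < rho0 -> exists L, has_cderiv q w L).
  { intros w hw. destruct (Hh w ltac:(lra)) as [L1 H1]. destruct (cderiv_taylor_poly c k w) as [L2 H2].
    assert (wn : w <> C0) by (apply Cmod_gt_0; lra).
    eexists. exact (cderiv_mult (fun w => h w - taylor_poly c k w)%C (fun w => / (w ^ S k))%C w _ _
      (cderiv_minus _ _ _ _ _ H1 H2) (cderiv_inv (fun w => w ^ S k)%C w _ (cderiv_pow k w) (Cpow_nz w (S k) wn))). }
  assert (Hlim : forall eps, 0 < eps -> exists delta, 0 < delta /\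
            forall w, 0 < Cmod w < delta -> Cmod (w * q w)%C <= eps).
  { intros eps he. destruct (Ho eps he) as [d [hd Hd]]. exists d; split; auto. intros w hw.
    assert (wn : w <> C0) by (apply Cmod_gt_0; lra).
    replace (w * q w)%C with ((h w - taylor_poly c k w) / w ^ k)%C
      by (unfold q; rewrite Cpow_S; field; split; auto; apply Cpow_nz; auto).
    rewrite Cmod_div, Cmod_pow by (apply Cpow_nz; auto).
    assert (0 < Cmod w ^ k) by (apply pow_lt; lra).
    apply Rmult_le_reg_r with (Cmod w ^ k); auto. unfold Rdiv. rewrite Rmult_assoc, Rinv_l by lra.
    rewrite Rmult_1_r. apply Hd; lra. }
  pose proof (cauchy_circle q rho0 h0 h1 HDq Hlim r hr) as HC.
  pose proof PI_RGT_0.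
  pose proof (arc_int_correct q r r ltac:(lra) ltac:(intros w hw; apply HDq; lra) r 0 (2 * PI) ltac:(lra) ltac:(lra)) as H1.
  fold (circle_int q r) in H1. rewrite HC in H1.
  pose proof (is_RInt_Cmul _ _ _ _ (RtoC (r ^ k) / Ci)%C H1) as H2.
  pose proof (is_RInt_taylor_poly c r k k (Nat.le_refl k)) as H3. rewrite Nat.eqb_refl in H3.
  eapply is_RInt_Cfv; [| |exact (is_RInt_Cplus _ _ _ _ _ _ H2 H3)].
  - intros t. unfold arc_integrand, q. rewrite Cpow_mult_l, cis_opp, Cpow_inv by apply cis_neq0.
    rewrite RtoC_pow, !Cpow_S.
    assert (cis t <> C0) by apply cis_neq0. assert (RtoC r <> C0) by (apply RtoC_neq0; lra).
    field. repeat split; auto; try apply Cpow_nz; auto. apply Ci_nz.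
  - ring.
Qed.

Lemma circle_int_positive_mode h rho0 m : 0 < rho0 -> rho0 <= 1 ->
  (forall w, Cmod w < rho0 -> exists L, has_cderiv h w L) ->
  forall r, 0 < r < rho0 -> is_RInt (fun t => h (RtoC r * cis t) * cis t ^ S m)%C 0 (2 * PI) C0.
Proof.
  intros h0 h1 Hh r hr.
  set (q := fun w => (h w * w ^ m)%C).
  assert (HDq : forall w, 0 < Cmod w < rho0 -> exists L, has_cderiv q w L).
  { intros w hw. destruct (Hh w ltac:(lra)) as [L1 H1]. destruct (cderiv_pow_ex m w) as [L2 H2].
    eexists. exact (cderiv_mult h (fun w => w ^ m)%C w _ _ H1 H2). }
  assert (Hlim : forall eps, 0 < eps -> exists delta, 0 < delta /\
            forall w, 0 < Cmod w < delta -> Cmod (w * q w)%C <= eps).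
  { intros eps he. destruct (Hh C0 ltac:(rewrite Cmod_0; lra)) as [L0 H0].
    destruct (cderiv_bounded h C0 L0 H0) as [d [M [hd Hd]]].
    assert (hM : 0 <= M).
    { pose proof (Hd C0 ltac:(replace (C0 - C0)%C with C0 by ring; rewrite Cmod_0; lra)).
      pose proof (Cmod_ge_0 (h C0)). lra. }
    exists (Rmin (Rmin d 1) (eps / (M + 1))). split; [repeat apply Rmin_glb_lt; try lra; apply Rdiv_lt_0_compat; lra|].
    intros w hw. unfold q.
    assert (w1 : Cmod w < d) by (eapply Rlt_le_trans; [apply hw|]; eapply Rle_trans; apply Rmin_l).
    assert (w2 : Cmod w < 1) by (eapply Rlt_le_trans; [apply hw|]; eapply Rle_trans; [apply Rmin_l|apply Rmin_r]).
    assert (w3 : Cmod w < eps / (M + 1)) by (eapply Rlt_le_trans; [apply hw|]; apply Rmin_r).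
    replace (w * (h w * w ^ m))%C with (h w * (w * w ^ m))%C by ring.
    rewrite Cmod_mult, Cmod_mult, Cmod_pow.
    assert (Cmod (h w) <= M) by (apply Hd; replace (w - C0)%C with w by ring; auto).
    pose proof (Cmod_ge_0 w). pose proof (Cmod_ge_0 (h w)).
    assert (Cmod w ^ m <= 1) by (rewrite <- (pow1 m); apply pow_incr; lra).
    assert (0 <= Cmod w ^ m) by (apply pow_le; lra).
    apply Rle_trans with (M * Cmod w); [apply Rmult_le_compat; nra|].
    apply Rle_trans with ((M + 1) * (eps / (M + 1))); [nra|right; field; lra]. }
  pose proof (cauchy_circle q rho0 h0 h1 HDq Hlim r hr) as HC.
  pose proof PI_RGT_0.
  pose proof (arc_int_correct q r r ltac:(lra) ltac:(intros w hw; apply HDq; lra) r 0 (2 * PI) ltac:(lra) ltac:(lra)) as H1.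
  fold (circle_int q r) in H1. rewrite HC in H1.
  assert (RtoC r <> C0) by (apply RtoC_neq0; lra).
  eapply is_RInt_Cfv; [| |exact (is_RInt_Cmul _ _ _ _ (/ (Ci * RtoC r ^ S m))%C H1)].
  - intros t. unfold arc_integrand, q. rewrite Cpow_mult_l, !Cpow_S.
    field. split; [apply Cpow_nz; auto|split; auto; apply Ci_nz].
  - ring.
Qed.

Lemma cauchy_estimate h dh z rho0 r M : 0 < r -> r < rho0 -> rho0 <= 1 ->
  (forall v, Cmod (v - z) < rho0 -> has_cderiv h v (dh v)) ->
  (forall t, Cmod (h (z + RtoC r * cis t)%C) <= M) ->
  Cmod (dh z) <= M / r.
Proof.
  intros hr hr0 h1 Hh HM. pose proof PI_RGT_0.
  set (c := fun n => match n with O => h z | _ => dh z end).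
  assert (HD : forall w, Cmod w < rho0 -> exists L, has_cderiv (fun v => h (z + v))%C w L).
  { intros w hw. exists (dh (z + w)%C).
    eapply small_o_ext; [|apply Hh; replace (z + w - z)%C with w by ring; auto].
    intros k. simpl. replace (z + (w + k))%C with (z + w + k)%C by ring. reflexivity. }
  assert (Ho : taylor_o (fun v => h (z + v))%C c 1).
  { intros eps he. assert (Hz := Hh z ltac:(replace (z - z)%C with C0 by ring; rewrite Cmod_0; lra)).
    destruct (Hz eps he) as [d [hd Hd]]. exists d; split; auto. intros w hw.
    simpl. rewrite Rmult_1_r. replace (h (z + w) - (h z + dh z * (w * C1)))%C with (h (z + w) - h z - dh z * w)%C by ring.
    auto. }
  pose proof (cauchy_coefficient _ rho0 c 1 ltac:(lra) h1 HD Ho r ltac:(lra)) as Hc.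
  assert (H1 : Cmod (RtoC (2 * PI * r ^ 1) * c 1%nat)%C <= (2 * PI - 0) * M).
  { eapply is_RInt_Cnorm; [lra| |exact Hc]. intros t _. cbv beta.
    rewrite Cmod_mult, Cpow_1_r, Cmod_cis, Rmult_1_r. apply HM. }
  rewrite Cmod_mult, Cmod_R in H1. simpl c in H1. rewrite Rabs_right in H1 by (simpl; nra).
  apply Rmult_le_reg_l with (2 * PI * r); [nra|].
  replace (2 * PI * r * (M / r)) with ((2 * PI - 0) * M) by (field; lra). simpl in H1. lra.
Qed.

(** * The Carathéodory lemma *)

Lemma taylor_o_lower h c k : taylor_o h c (S k) -> taylor_o h c k.
Proof.
  intros H eps he. destruct (H (eps / 2)) as [d [hd Hd]]; [lra|].
  set (a := Cmod (c (S k))). assert (0 <= a) by apply Cmod_ge_0.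
  exists (Rmin (Rmin d 1) (eps / (2 * (a + 1)))).
  split; [repeat apply Rmin_glb_lt; try lra; apply Rdiv_lt_0_compat; lra|].
  intros w hw.
  assert (w1 : Cmod w < d) by (eapply Rlt_le_trans; [apply hw|]; eapply Rle_trans; apply Rmin_l).
  assert (w2 : Cmod w < 1) by (eapply Rlt_le_trans; [apply hw|]; eapply Rle_trans; [apply Rmin_l|apply Rmin_r]).
  assert (w3 : Cmod w < eps / (2 * (a + 1))) by (eapply Rlt_le_trans; [apply hw|]; apply Rmin_r).
  specialize (Hd w w1). simpl taylor_poly in Hd.
  replace (h w - taylor_poly c k w)%C
    with ((h w - (taylor_poly c k w + c (S k) * w ^ S k)) + c (S k) * w ^ S k)%C by ring.
  eapply Rle_trans; [apply Cmod_triangle|]. rewrite Cmod_mult, Cmod_pow. fold a.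
  simpl pow in *. pose proof (Cmod_ge_0 w). assert (0 <= Cmod w ^ k) by (apply pow_le; lra).
  assert (a * Cmod w <= eps / 2).
  { apply Rle_trans with ((a + 1) * (eps / (2 * (a + 1)))); [nra|right; field; lra]. }
  assert (Cmod w * Cmod w ^ k <= Cmod w ^ k) by nra.
  assert (a * (Cmod w * Cmod w ^ k) <= eps / 2 * Cmod w ^ k) by nra.
  assert (eps / 2 * (Cmod w * Cmod w ^ k) <= eps / 2 * Cmod w ^ k) by (apply Rmult_le_compat_l; lra).
  rewrite Cpow_S. lra.
Qed.

Lemma taylor_o_lower_le h c j k : (j <= k)%nat -> taylor_o h c k -> taylor_o h c j.
Proof. intros hjk. induction hjk; auto. intros H. apply IHhjk, taylor_o_lower, H. Qed.

(** For P with positive real part on the disc and P(0) = 1 the Fourier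
    coefficient identity  π r^k c_k = \int_0^{2π} Re P(re^{it}) e^{-ikt} dt
    gives |c_k| r^k <= (1/π) \int Re P = 2. *)
Lemma caratheodory_radius P c k : (1 <= k)%nat ->
  (forall w, Cmod w < 1 -> exists L, has_cderiv P w L) -> (forall w, Cmod w < 1 -> 0 < fst (P w)) ->
  taylor_o P c k -> c O = C1 ->
  forall r, 0 < r < 1 -> Cmod (c k) * r ^ k <= 2.
Proof.
  intros hk HD Hpos Hk hc0 r hr. pose proof PI_RGT_0.
  pose proof (cauchy_coefficient P 1 c k ltac:(lra) ltac:(lra) HD Hk r hr) as A.
  pose proof (cauchy_coefficient P 1 c 0 ltac:(lra) ltac:(lra) HD (taylor_o_lower_le P c 0 k ltac:(lia) Hk) r hr) as C.
  destruct k as [|m]; [lia|].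
  pose proof (is_RInt_conj _ _ _ _ (circle_int_positive_mode P 1 m ltac:(lra) ltac:(lra) HD r hr)) as B.
  assert (Cr : is_RInt (fun t => fst (P (RtoC r * cis t)%C)) 0 (2 * PI) (2 * PI)).
  { eapply is_RInt_Rfv; [| |exact (is_RInt_fct_extend_fst _ _ _ _ C)]; simpl.
    - intros t. ring.
    - rewrite hc0. simpl. ring. }
  (* k-th Fourier coefficient of Re P = (P + conj P)/2 *)
  assert (F1 : is_RInt (fun t => RtoC (fst (P (RtoC r * cis t)%C)) * cis (- t) ^ S m)%C 0 (2 * PI)
                 (RtoC (PI * r ^ S m) * c (S m))%C).
  { eapply is_RInt_Cfv; [| |exact (is_RInt_Cmul _ _ _ _ (/ RtoC 2)%C (is_RInt_Cplus _ _ _ _ _ _ A B))].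
    - intros t. cbv beta. rewrite Cmult_conj, Cpow_conj, conj_cis.
      set (u := P (RtoC r * cis t)%C).
      replace (RtoC (fst u)) with ((u + Cconj u) / 2)%C by (apply C_eq; simpl; field).
      field.
    - apply C_eq; simpl; field. }
  assert (NR : Cmod (RtoC (PI * r ^ S m) * c (S m))%C <= 2 * PI).
  { rewrite <- norm_C.
    apply (norm_RInt_le (V:=C_R_NormedModule) (fun t => RtoC (fst (P (RtoC r * cis t)%C)) * cis (- t) ^ S m)%C
      (fun t => fst (P (RtoC r * cis t)%C)) 0 (2 * PI) _ (2 * PI));
      [lra| |exact F1|exact Cr].
    intros t ht. rewrite norm_C, Cmod_mult, Cmod_R, Cmod_pow, Cmod_cis, pow1, Rmult_1_r.
    rewrite Rabs_right; [lra|]. left; apply Hpos; rewrite Cmod_polar, Rabs_right; lra. }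
  assert (0 < r ^ S m) by (apply pow_lt; lra).
  rewrite Cmod_mult, Cmod_R, Rabs_right in NR by nra.
  apply Rmult_le_reg_l with PI; auto. nra.
Qed.

Lemma bernoulli x k : 0 <= x <= 1 -> 1 - INR k * x <= (1 - x) ^ k.
Proof.
  intros hx. induction k as [|k IH]; [simpl; lra|].
  rewrite S_INR. simpl. pose proof (pos_INR k).
  assert (0 <= (1 - x) ^ k) by (apply pow_le; lra). nra.
Qed.

Lemma le_of_radius_bound p k : (1 <= k)%nat -> (forall r, 0 < r < 1 -> p * r ^ k <= 2) -> p <= 2.
Proof.
  intros hk Hr. destruct (Rle_or_lt p 2) as [h|h]; auto. exfalso.
  pose proof (lt_0_INR k ltac:(lia)) as hk0.
  set (x := (1 - 2 / p) / (2 * INR k)).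
  assert (hx : 0 < x <= 1 / 2).
  { assert (0 < 2 / p < 1).
    { split; [apply Rdiv_lt_0_compat; lra|]. apply Rmult_lt_reg_r with p; [lra|].
      unfold Rdiv. rewrite Rmult_assoc, Rinv_l by lra. lra. }
    assert (1 <= INR k) by (apply (le_INR 1); lia).
    unfold x; split; [apply Rdiv_lt_0_compat; lra|].
    apply Rmult_le_reg_r with (2 * INR k); [lra|].
    replace ((1 - 2 / p) / (2 * INR k) * (2 * INR k)) with (1 - 2 / p) by (field; lra). lra. }
  specialize (Hr (1 - x) ltac:(lra)).
  pose proof (bernoulli x k ltac:(lra)) as Hb.
  assert (Hkx : INR k * x = (1 - 2 / p) / 2) by (unfold x; field; lra).
  assert (p * (1 - (1 - 2 / p) / 2) <= p * (1 - x) ^ k) by (apply Rmult_le_compat_l; lra).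
  assert (p * (1 - (1 - 2 / p) / 2) = p / 2 + 1) by (field; lra).
  lra.
Qed.

Theorem caratheodory P c k : (1 <= k)%nat ->
  (forall w, Cmod w < 1 -> exists L, has_cderiv P w L) -> (forall w, Cmod w < 1 -> 0 < fst (P w)) ->
  taylor_o P c k -> c O = C1 -> Cmod (c k) <= 2.
Proof.
  intros hk HD Hpos Ho hc0. apply (le_of_radius_bound _ k hk).
  exact (caratheodory_radius P c k hk HD Hpos Ho hc0).
Qed.

(** * Remainders of order O(|z|^n) *)

Definition bigO (n : nat) (f : C -> C) :=
  exists K delta, 0 < delta /\ forall z, Cmod z < delta -> Cmod (f z) <= K * Cmod z ^ n.

Lemma bigO_nonneg n f : bigO n f ->
  exists K delta, 0 <= K /\ 0 < delta /\ forall z, Cmod z < delta -> Cmod (f z) <= K * Cmod z ^ n.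
Proof.
  intros [K [d [hd H]]]. exists (Rabs K), d. split; [apply Rabs_pos|]. split; auto. intros z hz.
  eapply Rle_trans; [apply H; auto|]. apply Rmult_le_compat_r; [apply pow_le, Cmod_ge_0|apply Rle_abs].
Qed.

Lemma bigO_ext n f g d0 : 0 < d0 -> (forall z, Cmod z < d0 -> f z = g z) -> bigO n f -> bigO n g.
Proof.
  intros h0 E1 [K [d [hd H]]]. exists K, (Rmin d d0). split; [apply Rmin_glb_lt; auto|].
  intros z hz. rewrite <- E1 by (eapply Rlt_le_trans; [apply hz|apply Rmin_r]).
  apply H. eapply Rlt_le_trans; [apply hz|apply Rmin_l].
Qed.

Lemma bigO_plus n f g : bigO n f -> bigO n g -> bigO n (fun z => f z + g z)%C.
Proof.
  intros [K1 [d1 [h1 H1]]] [K2 [d2 [h2 H2]]]. exists (K1 + K2), (Rmin d1 d2).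
  split; [apply Rmin_glb_lt; auto|]. intros z hz. eapply Rle_trans; [apply Cmod_triangle|].
  pose proof (H1 z (Rlt_le_trans _ _ _ hz (Rmin_l _ _))).
  pose proof (H2 z (Rlt_le_trans _ _ _ hz (Rmin_r _ _))). lra.
Qed.

Lemma bigO_opp n f : bigO n f -> bigO n (fun z => - f z)%C.
Proof. intros [K [d [hd H]]]. exists K, d. split; auto. intros z hz. rewrite Cmod_opp. auto. Qed.

Lemma bigO_minus n f g : bigO n f -> bigO n g -> bigO n (fun z => f z - g z)%C.
Proof. intros. apply bigO_plus; auto. apply bigO_opp; auto. Qed.

Lemma bigO_mul m n f g : bigO m f -> bigO n g -> bigO (m + n) (fun z => f z * g z)%C.
Proof.
  intros Hf Hg. destruct (bigO_nonneg _ _ Hf) as [K1 [d1 [k1 [h1 H1]]]].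
  destruct (bigO_nonneg _ _ Hg) as [K2 [d2 [k2 [h2 H2]]]].
  exists (K1 * K2), (Rmin d1 d2). split; [apply Rmin_glb_lt; auto|].
  intros z hz. rewrite Cmod_mult, pow_add.
  pose proof (H1 z (Rlt_le_trans _ _ _ hz (Rmin_l _ _))).
  pose proof (H2 z (Rlt_le_trans _ _ _ hz (Rmin_r _ _))).
  replace (K1 * K2 * (Cmod z ^ m * Cmod z ^ n)) with ((K1 * Cmod z ^ m) * (K2 * Cmod z ^ n)) by ring.
  apply Rmult_le_compat; auto; apply Cmod_ge_0.
Qed.

Lemma bigO_cmul n c f : bigO n f -> bigO n (fun z => c * f z)%C.
Proof.
  intros [K [d [hd H]]]. exists (Cmod c * K), d. split; auto. intros z hz.
  rewrite Cmod_mult, Rmult_assoc. apply Rmult_le_compat_l; [apply Cmod_ge_0|auto].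
Qed.

Lemma bigO_zpow n : bigO n (fun z => z ^ n)%C.
Proof. exists 1, 1. split; [lra|]. intros z _. rewrite Cmod_pow. lra. Qed.

Lemma bigO_id : bigO 1 (fun z => z).
Proof. apply (bigO_ext 1 (fun z => z ^ 1)%C _ 1); [lra|intros; apply Cpow_1_r|apply bigO_zpow]. Qed.

Lemma bigO_const c : bigO 0 (fun _ => c).
Proof. exists (Cmod c), 1. split; [lra|]. intros. simpl. lra. Qed.

Lemma bigO_weak n f : bigO (S n) f -> bigO n f.
Proof.
  intros Hf. destruct (bigO_nonneg _ _ Hf) as [K [d [k [hd H]]]].
  exists K, (Rmin d 1). split; [apply Rmin_glb_lt; lra|].
  intros z hz. pose proof (H z (Rlt_le_trans _ _ _ hz (Rmin_l _ _))) as Hz.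
  pose proof (Rlt_le_trans _ _ _ hz (Rmin_r _ _)).
  simpl in Hz. pose proof (Cmod_ge_0 z). assert (0 <= Cmod z ^ n) by (apply pow_le; lra).
  eapply Rle_trans; [apply Hz|]. apply Rmult_le_compat_l; auto. nra.
Qed.

Lemma bigO_weak_le m n f : (m <= n)%nat -> bigO n f -> bigO m f.
Proof. intros h. induction h; auto. intros; apply IHh, bigO_weak; auto. Qed.

Lemma bigO1_small f : bigO 1 f -> forall eps, 0 < eps ->
  exists delta, 0 < delta /\ forall z, Cmod z < delta -> Cmod (f z) < eps.
Proof.
  intros Hf eps he. destruct (bigO_nonneg _ _ Hf) as [K [d [k [hd H]]]].
  exists (Rmin d (eps / (K + 1))). split; [apply Rmin_glb_lt; auto; apply Rdiv_lt_0_compat; lra|].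
  intros z hz. pose proof (H z (Rlt_le_trans _ _ _ hz (Rmin_l _ _))) as Hz.
  pose proof (Rlt_le_trans _ _ _ hz (Rmin_r _ _)).
  simpl in Hz. rewrite Rmult_1_r in Hz. pose proof (Cmod_ge_0 z).
  eapply Rle_lt_trans; [apply Hz|]. apply Rle_lt_trans with ((K + 1) * Cmod z); [nra|].
  apply Rmult_lt_reg_r with (/ (K + 1)); [apply Rinv_0_lt_compat; lra|].
  rewrite (Rmult_comm (K + 1)), Rmult_assoc, Rinv_r by lra. lra.
Qed.

Lemma bigO_at0 n h : (1 <= n)%nat -> bigO n h -> h C0 = C0.
Proof.
  intros hn Hh. destruct (bigO_nonneg _ _ Hh) as [K [d [k [hd H]]]]. apply Cmod_eq_0.
  pose proof (H C0 ltac:(rewrite Cmod_0; lra)) as H0. rewrite Cmod_0, pow_i in H0 by lia.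
  pose proof (Cmod_ge_0 (h C0)). lra.
Qed.

Lemma bigO_comp n e w : bigO n e -> bigO 1 w -> bigO n (fun z => e (w z)).
Proof.
  intros [K1 [d1 [h1 H1]]] Hw. destruct (bigO_nonneg _ _ Hw) as [K [d [k [hd H]]]].
  destruct (bigO1_small w Hw d1 h1) as [d2 [hd2 H2]].
  exists (Rabs K1 * K ^ n), (Rmin d d2). split; [apply Rmin_glb_lt; auto|].
  intros z hz. pose proof (H z (Rlt_le_trans _ _ _ hz (Rmin_l _ _))) as Hz.
  pose proof (H2 z (Rlt_le_trans _ _ _ hz (Rmin_r _ _))).
  simpl in Hz. rewrite Rmult_1_r in Hz.
  eapply Rle_trans; [apply H1; auto|]. rewrite Rmult_assoc, <- Rpow_mult_distr.
  apply Rle_trans with (Rabs K1 * Cmod (w z) ^ n).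
  - apply Rmult_le_compat_r; [apply pow_le, Cmod_ge_0|apply Rle_abs].
  - apply Rmult_le_compat_l; [apply Rabs_pos|]. apply pow_incr. split; auto. apply Cmod_ge_0.
Qed.

Lemma bigO_divz n h : bigO (S n) h -> bigO n (fun z => h z * / z)%C.
Proof.
  intros Hh. destruct (bigO_nonneg _ _ Hh) as [K [d [k [hd H]]]]. exists K, d. split; auto. intros z hz.
  destruct (Req_dec (Cmod z) 0) as [z0|z0].
  - apply Cmod_eq_0 in z0. subst.
    replace (h C0 * / C0)%C with C0 by (replace (/ C0)%C with C0 by (apply C_eq; simpl; unfold Rdiv; ring); ring).
    rewrite Cmod_0. apply Rmult_le_pos; auto. apply pow_le; lra.
  - assert (zn : z <> C0) by (intro E0; apply z0; rewrite E0; apply Cmod_0).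
    pose proof (Cmod_ge_0 z). rewrite Cmod_mult, Cmod_inv by auto. pose proof (H z hz) as Hz. simpl in Hz.
    apply Rmult_le_reg_r with (Cmod z); [lra|]. rewrite Rmult_assoc, Rinv_l by lra.
    replace (K * Cmod z ^ n * Cmod z) with (K * (Cmod z * Cmod z ^ n)) by ring. lra.
Qed.

Lemma bigO_inv_one_minus om : bigO 1 om -> bigO 0 (fun z => / (C1 - om z))%C.
Proof.
  intros Ho. destruct (bigO1_small om Ho (1 / 2) ltac:(lra)) as [d [hd Hd]].
  exists 2, d. split; auto. intros z hz. simpl. rewrite Rmult_1_r.
  pose proof (Hd z hz).
  assert (h1 : 1 / 2 <= Cmod (C1 - om z)%C).
  { pose proof (Cmod_triangle (om z) (C1 - om z)%C) as Ht.
    replace (om z + (C1 - om z))%C with C1 in Ht by ring. rewrite Cmod_1 in Ht. lra. }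
  assert (C1 - om z <> C0)%C by (intro E0; rewrite E0, Cmod_0 in h1; lra).
  rewrite Cmod_inv by auto. apply Rle_trans with (/ (1 / 2)); [apply Rinv_le_contravar; lra|lra].
Qed.

Lemma cderiv_at0_bigO1 om L : has_cderiv om C0 L -> om C0 = C0 -> bigO 1 om.
Proof.
  intros H h0. destruct (cderiv_lipschitz om C0 L H) as [d [hd Hd]]. exists (Cmod L + 1), d. split; auto.
  intros z hz. specialize (Hd z hz). replace (C0 + z)%C with z in Hd by ring. rewrite h0 in Hd.
  replace (om z - C0)%C with (om z) in Hd by ring. simpl. lra.
Qed.

Lemma bigO_taylor_o h c k : bigO (S k) (fun z => h z - taylor_poly c k z)%C -> taylor_o h c k.
Proof.
  intros Hf eps he. destruct (bigO_nonneg _ _ Hf) as [K [d [k0 [hd H]]]].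
  exists (Rmin d (eps / (K + 1))). split; [apply Rmin_glb_lt; auto; apply Rdiv_lt_0_compat; lra|].
  intros z hz. pose proof (H z (Rlt_le_trans _ _ _ hz (Rmin_l _ _))) as Hz.
  pose proof (Rlt_le_trans _ _ _ hz (Rmin_r _ _)).
  simpl in Hz. pose proof (Cmod_ge_0 z). assert (0 <= Cmod z ^ k) by (apply pow_le; lra).
  eapply Rle_trans; [apply Hz|]. rewrite <- Rmult_assoc. apply Rmult_le_compat_r; auto.
  apply Rle_trans with ((K + 1) * (eps / (K + 1))); [nra|right; field; lra].
Qed.

Lemma cderiv_unique h z L1 L2 : has_cderiv h z L1 -> has_cderiv h z L2 -> L1 = L2.
Proof.
  intros H1 H2. replace L1 with ((L1 - L2) + L2)%C by ring.
  replace (L1 - L2)%C with C0; [ring|symmetry]. apply Cmod_eq_0.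
  apply Rle_antisym; [|apply Cmod_ge_0]. apply Rnot_lt_le. intro hc.
  set (e := Cmod (L1 - L2)%C / 4).
  destruct (H1 e ltac:(unfold e; lra)) as [d1 [hd1 D1]]. destruct (H2 e ltac:(unfold e; lra)) as [d2 [hd2 D2]].
  pose proof (Rmin_glb_lt _ _ _ hd1 hd2).
  set (k := RtoC (Rmin d1 d2 / 2)).
  assert (hk : Cmod k = Rmin d1 d2 / 2) by (unfold k; rewrite Cmod_R, Rabs_right; lra).
  specialize (D1 k ltac:(rewrite hk; pose proof (Rmin_l d1 d2); lra)).
  specialize (D2 k ltac:(rewrite hk; pose proof (Rmin_r d1 d2); lra)).
  assert (Hk : Cmod ((L1 - L2) * k)%C <= 2 * e * Cmod k).
  { replace ((L1 - L2) * k)%C with ((h (z + k) - h z - L2 * k) - (h (z + k) - h z - L1 * k))%C by ring.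
    eapply Rle_trans; [apply Cmod_minus_le|]. lra. }
  rewrite Cmod_mult in Hk. unfold e in Hk. rewrite hk in Hk. nra.
Qed.

(** Differentiation lowers the order by one: from the Cauchy estimate on the
    circle of radius |z|/2 around z. *)
Lemma bigO_derivative h dh : (forall v, Cmod v < 1 -> has_cderiv h v (dh v)) -> bigO 4 h -> bigO 3 dh.
Proof.
  intros HD Hh. destruct (bigO_nonneg _ _ Hh) as [K [d [k [hd H]]]].
  exists (81 / 8 * K), (Rmin (d / 2) (1 / 2)). split; [apply Rmin_glb_lt; lra|].
  intros z hz. pose proof (Rlt_le_trans _ _ _ hz (Rmin_l _ _)). pose proof (Rlt_le_trans _ _ _ hz (Rmin_r _ _)).
  destruct (Req_dec (Cmod z) 0) as [z0|z0].
  - apply Cmod_eq_0 in z0. subst z.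
    assert (Hd0 : has_cderiv h C0 C0).
    { pose proof (bigO_at0 4 h ltac:(lia) Hh) as h0.
      destruct (bigO_nonneg 2 h (bigO_weak_le 2 4 h ltac:(lia) Hh)) as [K2 [d2 [_ [hd2 H2]]]].
      apply small_o_quad. exists d2, K2. split; auto. intros k0 hk0. rewrite h0.
      replace (h (C0 + k0)%C - C0 - C0 * k0)%C with (h k0) by (replace (C0 + k0)%C with k0 by ring; ring).
      pose proof (H2 k0 hk0) as Hk0. simpl in Hk0. lra. }
    rewrite (cderiv_unique h C0 (dh C0) C0) by (auto; apply HD; rewrite Cmod_0; lra).
    rewrite Cmod_0. simpl. nra.
  - pose proof (Cmod_ge_0 z). assert (zp : 0 < Cmod z) by lra.
    apply Rle_trans with (K * (3 * Cmod z / 2) ^ 4 / (Cmod z / 2)); [|right; field; lra].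
    apply (cauchy_estimate h dh z (Cmod z) (Cmod z / 2)); try lra.
    + intros v hv. apply HD. replace v with (z + (v - z))%C by ring.
      eapply Rle_lt_trans; [apply Cmod_triangle|]. lra.
    + intros t. assert (hv : Cmod (z + RtoC (Cmod z / 2) * cis t)%C <= 3 * Cmod z / 2).
      { eapply Rle_trans; [apply Cmod_triangle|]. rewrite Cmod_polar, Rabs_right; lra. }
      eapply Rle_trans; [apply H; lra|]. apply Rmult_le_compat_l; auto.
      apply pow_incr. split; auto. apply Cmod_ge_0.
Qed.

Definition has_seriesC (c : nat -> C) (h : C -> C) := forall z, Cmod z < 1 ->
  forall eps, 0 < eps -> exists N, forall n, (n >= N)%nat -> Cmod (taylor_poly c n z - h z)%C < eps.

Lemma series_terms_bounded c h : has_seriesC c h ->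
  exists M, 0 <= M /\ forall j, Cmod (c j) * (1 / 2) ^ j <= M.
Proof.
  intros HS. set (rho := RtoC (1 / 2)).
  assert (hr : Cmod rho = 1 / 2) by (unfold rho; rewrite Cmod_R, Rabs_right; lra).
  destruct (HS rho ltac:(lra) 1 ltac:(lra)) as [N HN].
  set (f := fun i => Cmod (c i) * (1 / 2) ^ i).
  assert (hpos : forall i, 0 <= f i) by (intros; apply Rmult_le_pos; [apply Cmod_ge_0|apply pow_le; lra]).
  exists (2 + sum_f_R0 f N). split; [pose proof (cond_pos_sum f N hpos); lra|]. intros j.
  destruct (Compare_dec.le_lt_dec j N) as [hj|hj].
  - assert (f j <= sum_f_R0 f N).
    { clear HN. induction N as [|N IH]; [replace j with 0%nat by lia; simpl; lra|].
      destruct (Nat.eq_dec j (S N)) as [->|ne].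
      - simpl. pose proof (cond_pos_sum f N hpos). lra.
      - simpl. pose proof (IH ltac:(lia)). pose proof (hpos (S N)). lra. }
    fold (f j). lra.
  - destruct j as [|n]; [lia|].
    pose proof (HN (S n) ltac:(lia)). pose proof (HN n ltac:(lia)).
    assert (Hterm : Cmod (c (S n) * rho ^ S n)%C < 2).
    { replace (c (S n) * rho ^ S n)%C
        with ((taylor_poly c (S n) rho - h rho) - (taylor_poly c n rho - h rho))%C by (simpl; ring).
      eapply Rle_lt_trans; [apply Cmod_minus_le|]. lra. }
    rewrite Cmod_mult, Cmod_pow, hr in Hterm. pose proof (cond_pos_sum f N hpos). lra.
Qed.

(** The remainder of a power series after the k-th partial sum is O(|z|^{k+1}):
    it is dominated by a geometric tail on |z| < 1/4. *)
Lemma series_remainder c h k : has_seriesC c h -> bigO (S k) (fun z => h z - taylor_poly c k z)%C.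
Proof.
  intros HS. destruct (series_terms_bounded c h HS) as [M [hM0 HM]].
  exists (2 * M * 2 ^ S k), (1 / 4). split; [lra|].
  intros z hz. set (x := 2 * Cmod z). assert (hx : 0 <= x <= 1 / 2) by (unfold x; pose proof (Cmod_ge_0 z); lra).
  assert (Hterm : forall j, Cmod (c j * z ^ j)%C <= M * x ^ j).
  { intros j. rewrite Cmod_mult, Cmod_pow.
    replace (Cmod z ^ j) with ((1 / 2) ^ j * x ^ j) by (unfold x; rewrite <- Rpow_mult_distr; f_equal; field).
    rewrite <- Rmult_assoc. apply Rmult_le_compat_r; [apply pow_le; lra|auto]. }
  assert (0 <= x ^ S k) by (apply pow_le; lra).
  assert (Hd : forall d, Cmod (taylor_poly c (k + d) z - taylor_poly c k z)%C <= M * x ^ S k * (2 - 2 * (1 / 2) ^ d)).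
  { induction d as [|d IH].
    - rewrite Nat.add_0_r. replace (taylor_poly c k z - taylor_poly c k z)%C with C0 by ring.
      rewrite Cmod_0. simpl. nra.
    - rewrite Nat.add_succ_r.
      change (taylor_poly c (S (k + d)) z) with (taylor_poly c (k + d) z + c (S (k + d)) * z ^ S (k + d))%C.
      replace (taylor_poly c (k + d) z + c (S (k + d)) * z ^ S (k + d) - taylor_poly c k z)%C with
        ((taylor_poly c (k + d) z - taylor_poly c k z) + c (S (k + d)) * z ^ S (k + d))%C by ring.
      eapply Rle_trans; [apply Cmod_triangle|]. pose proof (Hterm (S (k + d))).
      assert (x ^ S (k + d) <= x ^ S k * (1 / 2) ^ d).
      { replace (S (k + d)) with (S k + d)%nat by lia. rewrite pow_add.
        apply Rmult_le_compat_l; [apply pow_le; lra|apply pow_incr; lra]. }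
      assert (M * x ^ S (k + d) <= M * (x ^ S k * (1 / 2) ^ d)) by (apply Rmult_le_compat_l; lra).
      change ((1 / 2) ^ S d) with (1 / 2 * (1 / 2) ^ d). assert (0 <= (1 / 2) ^ d) by (apply pow_le; lra). nra. }
  assert (Cmod (h z - taylor_poly c k z)%C <= 2 * M * x ^ S k).
  { apply Rnot_lt_le. intro hc. set (g := Cmod (h z - taylor_poly c k z)%C - 2 * M * x ^ S k) in *.
    destruct (HS z ltac:(lra) g ltac:(unfold g; lra)) as [N' HN'].
    specialize (HN' (k + N')%nat ltac:(lia)). specialize (Hd N').
    assert (0 <= (1 / 2) ^ N') by (apply pow_le; lra).
    assert (M * x ^ S k * (2 - 2 * (1 / 2) ^ N') <= 2 * M * x ^ S k)
      by (assert (0 <= M * x ^ S k) by (apply Rmult_le_pos; lra); nra).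
    assert (Cmod (h z - taylor_poly c k z)%C <=
            Cmod (taylor_poly c (k + N') z - h z)%C + Cmod (taylor_poly c (k + N') z - taylor_poly c k z)%C).
    { replace (h z - taylor_poly c k z)%C
        with (- (taylor_poly c (k + N') z - h z) + (taylor_poly c (k + N') z - taylor_poly c k z))%C by ring.
      eapply Rle_trans; [apply Cmod_triangle|]. rewrite Cmod_opp. lra. }
    unfold g in HN'. lra. }
  eapply Rle_trans; [apply H0|]. unfold x. rewrite Rpow_mult_distr. right; ring.
Qed.

(** * Schwarz functions and subordination *)

Definition schwarz (om : C -> C) : Prop :=
  (forall w, Cmod w < 1 -> exists L, has_cderiv om w L) /\
  (forall w, Cmod w < 1 -> Cmod (om w) < 1) /\ om C0 = C0.

Definition subordinateC (g phi : C -> C) : Prop :=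
  exists om, schwarz om /\ forall z, Cmod z < 1 -> g z = phi (om z).

Lemma re_cayley_pos (w : C) : Cmod w < 1 -> 0 < fst ((C1 + w) * / (C1 - w))%C.
Proof.
  intros h. destruct w as [x y]. unfold Cmod in h; simpl in h.
  assert (x * (x * 1) + y * (y * 1) < 1).
  { apply Rnot_le_lt. intro H. assert (1 <= sqrt (x * (x * 1) + y * (y * 1))) by
      (apply Rle_trans with (sqrt 1); [rewrite sqrt_1; lra|apply sqrt_le_1_alt; lra]). lra. }
  simpl. set (D := (1 + - x) * ((1 + - x) * 1) + (0 + - y) * ((0 + - y) * 1)).
  assert (0 < D) by (unfold D; nra).
  replace ((1 + x) * ((1 + - x) / D) - (0 + y) * (- (0 + - y) / D))
    with ((1 - x * x - y * y) / D) by (field; lra).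
  apply Rdiv_lt_0_compat; nra.
Qed.

(** Coefficient bounds for a Schwarz function ω = c1 z + c2 z^2 + O(z^3):
    Carathéodory applied to (1 + ω)/(1 - ω) = 1 + 2 c1 z + 2 (c2 + c1^2) z^2 + ... *)
Lemma schwarz_coefficients om c1 c2 : schwarz om ->
  bigO 3 (fun z => om z - c1 * z - c2 * z ^ 2)%C ->
  Cmod c1 <= 1 /\ Cmod (c2 + c1 * c1)%C <= 1.
Proof.
  intros [HD [Hin h0]] Hom.
  destruct (HD C0 ltac:(rewrite Cmod_0; lra)) as [L0 HL0].
  pose proof (cderiv_at0_bigO1 om L0 HL0 h0) as Om1.
  set (P := fun w => ((C1 + om w) * / (C1 - om w))%C).
  assert (nz : forall w, Cmod w < 1 -> (C1 - om w)%C <> C0).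
  { intros w hw E0. pose proof (Hin w hw) as Hw.
    replace (om w) with (C1 - (C1 - om w))%C in Hw by ring. rewrite E0 in Hw.
    replace (C1 - C0)%C with C1 in Hw by ring. rewrite Cmod_1 in Hw. lra. }
  assert (HP : forall w, Cmod w < 1 -> exists L, has_cderiv P w L).
  { intros w hw. destruct (HD w hw) as [L HL]. eexists. unfold P.
    exact (cderiv_mult (fun w => C1 + om w)%C (fun w => / (C1 - om w))%C w _ _
      (cderiv_plus _ _ _ _ _ (cderiv_const C1 w) HL)
      (cderiv_inv (fun w => C1 - om w)%C w _ (cderiv_minus _ _ _ _ _ (cderiv_const C1 w) HL) (nz w hw))). }
  assert (HPpos : forall w, Cmod w < 1 -> 0 < fst (P w)) by (intros; apply re_cayley_pos; auto).
  set (p := fun n => match n with O => C1 | 1%nat => (RtoC 2 * c1)%C | _ => (RtoC 2 * (c2 + c1 * c1))%C end).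
  assert (HO : taylor_o P p 2).
  { apply bigO_taylor_o.
    set (e := fun z => (om z - c1 * z - c2 * z ^ 2)%C).
    apply (bigO_ext 3 (fun z => (RtoC 2 * e z + RtoC 2 * c1 * c2 * z ^ 3 + RtoC 2 * c1 * (z * e z)
        + RtoC 2 * (c2 + c1 * c1) * (z ^ 2 * om z)) * / (C1 - om z))%C _ 1 ltac:(lra)).
    - intros z hz. unfold P, e, p. simpl taylor_poly. pose proof (nz z hz). simpl. field. auto.
    - apply (bigO_mul 3 0); [|apply bigO_inv_one_minus; auto].
      repeat apply bigO_plus.
      + apply bigO_cmul; auto.
      + apply bigO_cmul, bigO_zpow.
      + apply bigO_cmul, bigO_weak, (bigO_mul 1 3); auto. apply bigO_id.
      + apply bigO_cmul, (bigO_mul 2 1); auto. apply bigO_zpow. }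
  pose proof (caratheodory P p 1 ltac:(lia) HP HPpos (taylor_o_lower P p 1 HO) eq_refl) as C1b.
  pose proof (caratheodory P p 2 ltac:(lia) HP HPpos HO eq_refl) as C2b.
  simpl p in C1b, C2b. rewrite Cmod_mult, Cmod_R, Rabs_right in C1b, C2b by lra.
  split; lra.
Qed.

Lemma subordinate_expansion (phi : C -> C) (Bc : nat -> C) (g om : C -> C) (g1 g2 : C) :
  has_seriesC Bc phi -> Bc O = C1 -> Bc 1%nat <> C0 ->
  bigO 3 (fun z => g z - (C1 + g1 * z + g2 * z ^ 2))%C ->
  schwarz om -> (forall z, Cmod z < 1 -> g z = phi (om z)) ->
  let c1 := (g1 / Bc 1%nat)%C in let c2 := ((g2 - Bc 2%nat * (c1 * c1)) / Bc 1%nat)%C in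
  bigO 3 (fun z => om z - c1 * z - c2 * z ^ 2)%C.
Proof.
  intros HS hB0 nB1 Hg [HD [Hin h0]] Hsub c1 c2.
  set (B1 := Bc 1%nat) in *. set (B2 := Bc 2%nat) in *.
  destruct (HD C0 ltac:(rewrite Cmod_0; lra)) as [L0 HL0].
  pose proof (cderiv_at0_bigO1 om L0 HL0 h0) as Om1.
  set (eg := fun z => (g z - (C1 + g1 * z + g2 * z ^ 2))%C).
  set (ep := fun z => (phi (om z) - taylor_poly Bc 2 (om z))%C).
  assert (Hep : bigO 3 ep) by (apply (bigO_comp 3 (fun u => phi u - taylor_poly Bc 2 u)%C om); auto;
                               apply series_remainder; auto).
  assert (Rel : forall z, Cmod z < 1 ->
            (B1 * om z = g1 * z + g2 * z ^ 2 - B2 * (om z * om z) + eg z - ep z)%C).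
  { intros z hz. unfold eg, ep. rewrite Hsub by auto. simpl taylor_poly. rewrite hB0. fold B1 B2. simpl. ring. }
  assert (D1 : bigO 2 (fun z => om z - c1 * z)%C).
  { apply (bigO_ext 2 (fun z => / B1 * (g2 * z ^ 2 - B2 * (om z * om z) + eg z - ep z))%C _ 1 ltac:(lra)).
    - intros z hz. transitivity (/ B1 * (B1 * om z - g1 * z))%C.
      + rewrite Rel by auto. field. auto.
      + unfold c1. field. auto.
    - apply bigO_cmul, bigO_minus; [apply bigO_plus|apply bigO_weak; auto].
      + apply bigO_minus; [apply bigO_cmul, bigO_zpow|apply bigO_cmul, (bigO_mul 1 1); auto].
      + apply bigO_weak; auto. }
  assert (Sq : bigO 3 (fun z => om z * om z - c1 * c1 * z ^ 2)%C).
  { apply (bigO_ext 3 (fun z => (om z - c1 * z) * (om z + c1 * z))%C _ 1 ltac:(lra)).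
    - intros z hz. simpl. ring.
    - apply (bigO_mul 2 1); auto. apply bigO_plus; auto. apply bigO_cmul, bigO_id. }
  apply (bigO_ext 3 (fun z => / B1 * (- B2 * (om z * om z - c1 * c1 * z ^ 2) + eg z - ep z))%C _ 1 ltac:(lra)).
  - intros z hz. transitivity (/ B1 * (B1 * om z - g1 * z - (g2 - B2 * (c1 * c1)) * z ^ 2))%C.
    + rewrite Rel by auto. field. auto.
    + unfold c2, c1. field. auto.
  - apply bigO_cmul. apply bigO_minus; auto. apply bigO_plus; auto. apply bigO_cmul; auto.
Qed.

Lemma subordination_coefficients (phi : C -> C) (Bc : nat -> C) (g : C -> C) (g1 g2 : C) :
  has_seriesC Bc phi -> Bc O = C1 -> Bc 1%nat <> C0 ->
  bigO 3 (fun z => g z - (C1 + g1 * z + g2 * z ^ 2))%C -> subordinateC g phi ->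
  exists c1 c2, g1 = (Bc 1%nat * c1)%C /\ g2 = (Bc 1%nat * c2 + Bc 2%nat * (c1 * c1))%C /\
    Cmod c1 <= 1 /\ Cmod (c2 + c1 * c1)%C <= 1.
Proof.
  intros HS hB0 nB1 Hg [om [Hom Hsub]].
  pose proof (subordinate_expansion phi Bc g om g1 g2 HS hB0 nB1 Hg Hom Hsub) as He. cbv zeta in He.
  eexists; eexists; split; [|split; [|exact (schwarz_coefficients om _ _ Hom He)]]; field; auto.
Qed.

(** For |c1| <= 1 and |c2 + c1^2| <= 1 and real B1 > 0, B2:
    |B1 c2 + B2 c1^2| = |B1 (c2 + c1^2) + (B2 - B1) c1^2| <= B1 + |B2 - B1|. *)
Lemma schwarz_combination_bound (b1 b2 : R) c1 c2 : 0 < b1 -> Cmod c1 <= 1 -> Cmod (c2 + c1 * c1)%C <= 1 ->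
  Cmod (RtoC b1 * c2 + RtoC b2 * (c1 * c1))%C <= b1 + Rabs (b2 - b1).
Proof.
  intros hb h1 h2.
  replace (RtoC b1 * c2 + RtoC b2 * (c1 * c1))%C with (RtoC b1 * (c2 + c1 * c1) + RtoC (b2 - b1) * (c1 * c1))%C
    by (apply C_eq; simpl; ring).
  eapply Rle_trans; [apply Cmod_triangle|]. rewrite !Cmod_mult, !Cmod_R, Rabs_right by lra.
  pose proof (Cmod_ge_0 c1). pose proof (Rabs_pos (b2 - b1)).
  assert (Cmod c1 * Cmod c1 <= 1) by nra. pose proof (Cmod_ge_0 (c2 + c1 * c1)%C). nra.
Qed.

(** * Second-order expansions of z f'/f and of (f^-1)' *)

Lemma cderiv_cubic b1 b2 b3 v :
  has_cderiv (fun w => b1 * w + b2 * w ^ 2 + b3 * w ^ 3)%C v (b1 + RtoC 2 * b2 * v + RtoC 3 * b3 * v ^ 2)%C.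
Proof.
  eapply small_o_ext; [|exact (cderiv_plus _ _ _ _ _ (cderiv_plus _ _ _ _ _ (cderiv_scal b1 _ v _ (cderiv_id v))
     (cderiv_scal b2 _ v _ (cderiv_pow 1 v))) (cderiv_scal b3 _ v _ (cderiv_pow 2 v)))].
  intros k. cbv beta. f_equal. f_equal. apply C_eq; simpl; ring.
Qed.

Lemma cubic_derivative_expansion h dh b1 b2 b3 :
  (forall v, Cmod v < 1 -> has_cderiv h v (dh v)) ->
  bigO 4 (fun z => h z - (b1 * z + b2 * z ^ 2 + b3 * z ^ 3))%C ->
  bigO 3 (fun z => dh z - (b1 + RtoC 2 * b2 * z + RtoC 3 * b3 * z ^ 2))%C.
Proof.
  intros HD He. apply (bigO_derivative (fun z => h z - (b1 * z + b2 * z ^ 2 + b3 * z ^ 3))%C); auto.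
  intros v hv. exact (cderiv_minus _ _ _ _ _ (HD v hv) (cderiv_cubic b1 b2 b3 v)).
Qed.

Lemma normalized_cubic_expansion f a : has_seriesC a f -> a O = C0 -> a 1%nat = C1 ->
  bigO 4 (fun z => f z - (C1 * z + a 2%nat * z ^ 2 + a 3%nat * z ^ 3))%C.
Proof.
  intros HS h0 h1. apply (bigO_ext 4 (fun z => f z - taylor_poly a 3 z)%C _ 1 ltac:(lra)).
  - intros z _. simpl taylor_poly. rewrite h0, h1. simpl. ring.
  - apply series_remainder; auto.
Qed.

Lemma starlike_remainder_bigO (a2 a3 b : C) (e1' e2 om : C -> C) :
  bigO 3 e1' -> bigO 3 e2 -> bigO 1 om ->
  bigO 3 (fun z => (z ^ 3 * (- (a2 * a3 + b * a2) - b * a3 * z) + e2 z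
           - (C1 + a2 * z + b * z ^ 2) * e1' z) * / (C1 - om z))%C.
Proof.
  intros He1' He2 Hom.
  apply (bigO_mul 3 0); [|apply bigO_inv_one_minus; auto].
  apply bigO_minus; [apply bigO_plus; auto|].
  - apply (bigO_mul 3 0); [apply bigO_zpow|]. apply bigO_minus; [apply bigO_const|].
    apply bigO_weak, bigO_cmul, bigO_id.
  - apply (bigO_mul 0 3); auto. repeat apply bigO_plus.
    + apply bigO_const.
    + apply bigO_weak, bigO_cmul, bigO_id.
    + apply bigO_weak, bigO_weak, bigO_cmul, bigO_zpow.
Qed.

Lemma starlike_quotient_expansion f df g a : has_seriesC a f -> a O = C0 -> a 1%nat = C1 ->
  (forall v, Cmod v < 1 -> has_cderiv f v (df v)) ->
  (forall z, Cmod z < 1 -> z <> C0 -> g z = (z * df z / f z)%C) -> g C0 = C1 ->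
  bigO 3 (fun z => g z - (C1 + a 2%nat * z + (RtoC 2 * a 3%nat - a 2%nat * a 2%nat) * z ^ 2))%C.
Proof.
  intros HS h0 h1 Hdf Hg hg0.
  set (a2 := a 2%nat). set (a3 := a 3%nat). set (b := (RtoC 2 * a3 - a2 * a2)%C).
  set (e1 := fun z => (f z - (C1 * z + a2 * z ^ 2 + a3 * z ^ 3))%C).
  assert (He1 : bigO 4 e1) by (apply normalized_cubic_expansion; auto).
  set (e2 := fun z => (df z - (C1 + RtoC 2 * a2 * z + RtoC 3 * a3 * z ^ 2))%C).
  assert (He2 : bigO 3 e2) by (apply (cubic_derivative_expansion f); auto).
  set (e1' := fun z => (e1 z * / z)%C).
  assert (He1' : bigO 3 e1') by (apply bigO_divz; auto).
  (* f z = z (1 - om z) with om = O(z) *)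
  set (om := fun z => (- (a2 * z + a3 * z ^ 2 + e1' z))%C).
  assert (Hom : bigO 1 om).
  { apply bigO_opp. repeat apply bigO_plus.
    - apply bigO_cmul, bigO_id.
    - apply bigO_cmul, bigO_weak, bigO_zpow.
    - apply (bigO_weak_le 1 3); auto. }
  destruct (bigO1_small om Hom (1 / 2) ltac:(lra)) as [d [hd Hd]].
  apply (bigO_ext 3 (fun z => (z ^ 3 * (- (a2 * a3 + b * a2) - b * a3 * z) + e2 z
           - (C1 + a2 * z + b * z ^ 2) * e1' z) * / (C1 - om z))%C _ (Rmin d 1) ltac:(apply Rmin_glb_lt; lra)).
  - intros z hz. pose proof (Rlt_le_trans _ _ _ hz (Rmin_l _ _)) as hzd.
    assert (nu : (C1 - om z)%C <> C0).
    { intro E0. pose proof (Hd z hzd) as H1.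
      replace (om z) with C1 in H1 by (replace (om z) with (C1 - (C1 - om z))%C by ring; rewrite E0; ring).
      rewrite Cmod_1 in H1. lra. }
    destruct (Ceq_dec z C0) as [->|zn].
    + rewrite hg0. unfold e1'. replace (/ C0)%C with C0 by (apply C_eq; simpl; unfold Rdiv; ring).
      rewrite (bigO_at0 3 e2) by (auto; lia). simpl. field. auto.
    + assert (fz : f z = (z * (C1 - om z))%C) by (unfold om, e1', e1; field; auto).
      rewrite Hg, fz by (auto; apply (Rlt_le_trans _ _ _ hz), Rmin_r).
      replace (df z) with (e2 z + (C1 + RtoC 2 * a2 * z + RtoC 3 * a3 * z ^ 2))%C by (unfold e2; ring).
      replace (e1' z) with (C1 - om z - (C1 + a2 * z + a3 * z ^ 2))%C by (unfold om; ring).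
      unfold b. simpl. field. auto.
  - apply starlike_remainder_bigO; auto.
Qed.

Lemma inverse_cubic_expansion f a F L r0 : has_seriesC a f -> a O = C0 -> a 1%nat = C1 ->
  has_cderiv F C0 L -> 0 < r0 -> (forall w, Cmod w < r0 -> f (F w) = w) -> F C0 = C0 ->
  bigO 4 (fun w => F w - (C1 * w + (- a 2%nat) * w ^ 2 + (RtoC 2 * a 2%nat * a 2%nat - a 3%nat) * w ^ 3))%C.
Proof.
  intros HS h0 h1 HdF hr0 Hinv hF0.
  set (a2 := a 2%nat). set (a3 := a 3%nat).
  pose proof (cderiv_at0_bigO1 F L HdF hF0) as HF1.
  set (e := fun w => (f (F w) - (C1 * F w + a2 * F w ^ 2 + a3 * F w ^ 3))%C).
  assert (He : bigO 4 e) by (apply (bigO_comp 4 (fun u => f u - (C1 * u + a2 * u ^ 2 + a3 * u ^ 3))%C F); auto;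
                            apply normalized_cubic_expansion; auto).
  assert (Rel : forall w, Cmod w < r0 -> e w = (w - a2 * (F w * F w) - a3 * (F w * F w * F w) - F w)%C).
  { intros w hw. unfold e. rewrite Hinv by auto. simpl. ring. }
  set (d1 := fun w => (F w - w)%C).
  assert (Hd1 : bigO 2 d1).
  { apply (bigO_ext 2 (fun w => - (a2 * (F w * F w) + a3 * (F w * F w * F w) + e w))%C _ r0 hr0).
    - intros w hw. unfold d1. rewrite (Rel w hw). ring.
    - apply bigO_opp, bigO_plus; [apply bigO_plus|apply bigO_weak, bigO_weak; auto].
      + apply bigO_cmul, (bigO_mul 1 1); auto.
      + apply bigO_cmul, bigO_weak, (bigO_mul 2 1); auto. apply (bigO_mul 1 1); auto. }
  set (d2 := fun w => (F w - w + a2 * w ^ 2)%C).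
  assert (Hd2 : bigO 3 d2).
  { apply (bigO_ext 3 (fun w => - (a2 * (d1 w * (F w + w)) + a3 * (F w * F w * F w) + e w))%C _ r0 hr0).
    - intros w hw. unfold d2, d1. rewrite (Rel w hw). simpl. ring.
    - apply bigO_opp, bigO_plus; [apply bigO_plus|apply bigO_weak; auto].
      + apply bigO_cmul, (bigO_mul 2 1); auto. apply bigO_plus; auto. apply bigO_id.
      + apply bigO_cmul, (bigO_mul 2 1); auto. apply (bigO_mul 1 1); auto. }
  apply (bigO_ext 4 (fun w => - a2 * (a2 * a2 * w ^ 4 + d2 w * (F w + w - a2 * w ^ 2))
          - a3 * (d1 w * (F w * F w + F w * w + w * w)) - e w)%C _ r0 hr0).
  - intros w hw. unfold d2, d1. rewrite (Rel w hw). simpl. ring.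
  - apply bigO_minus; [apply bigO_minus|auto].
    + apply bigO_cmul, bigO_plus; [apply bigO_cmul, bigO_zpow|]. apply (bigO_mul 3 1); auto.
      apply bigO_minus; [apply bigO_plus; auto; apply bigO_id|apply bigO_weak, bigO_cmul, bigO_zpow].
    + apply bigO_cmul, (bigO_mul 2 2); auto. repeat apply bigO_plus.
      * apply (bigO_mul 1 1); auto.
      * apply (bigO_mul 1 1); auto. apply bigO_id.
      * apply (bigO_mul 1 1); apply bigO_id.
Qed.

Lemma inverse_derivative_expansion f a F dF r0 : has_seriesC a f -> a O = C0 -> a 1%nat = C1 ->
  (forall v, Cmod v < 1 -> has_cderiv F v (dF v)) -> 0 < r0 ->
  (forall w, Cmod w < r0 -> f (F w) = w) -> F C0 = C0 ->
  bigO 3 (fun w => dF w - (C1 + (- (RtoC 2 * a 2%nat)) * w + (RtoC 6 * a 2%nat * a 2%nat - RtoC 3 * a 3%nat) * w ^ 2))%C.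
Proof.
  intros HS h0 h1 HdF hr0 Hinv hF0.
  pose proof (HdF C0 ltac:(rewrite Cmod_0; lra)) as HdF0.
  pose proof (cubic_derivative_expansion F dF _ _ _ HdF
    (inverse_cubic_expansion f a F (dF C0) r0 HS h0 h1 HdF0 hr0 Hinv hF0)) as H.
  eapply (bigO_ext 3 _ _ 1 ltac:(lra)); [|exact H]. intros w _. cbv beta. f_equal. apply C_eq; simpl; ring.
Qed.

(** * The coefficient bounds on C *)

Lemma subordinate_second_coefficient (phi : C -> C) (Bc : nat -> C) (b1 b2 : R) (g : C -> C) (g1 g2 : C) :
  has_seriesC Bc phi -> Bc O = C1 -> Bc 1%nat = RtoC b1 -> 0 < b1 -> Bc 2%nat = RtoC b2 ->
  bigO 3 (fun z => g z - (C1 + g1 * z + g2 * z ^ 2))%C -> subordinateC g phi ->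
  Cmod g2 <= b1 + Rabs (b2 - b1).
Proof.
  intros HS hB0 hB1 hb1 hB2 Hg Hsub.
  assert (nB1 : Bc 1%nat <> C0) by (rewrite hB1; apply RtoC_neq0; lra).
  destruct (subordination_coefficients phi Bc g g1 g2 HS hB0 nB1 Hg Hsub) as [c1 [c2 [_ [-> [h1 h2]]]]].
  rewrite hB1, hB2. apply schwarz_combination_bound; auto.
Qed.

Lemma bounds_from_second_coefficients (a2 a3 : C) M :
  Cmod (RtoC 2 * a3 - a2 * a2)%C <= M -> Cmod (RtoC 6 * a2 * a2 - RtoC 3 * a3)%C <= M ->
  Cmod a2 <= sqrt (5 * M) / 3 /\ Cmod a3 <= 7 * M / 9.
Proof.
  intros HX HY.
  assert (Hn : forall r x, 0 <= r -> Cmod (RtoC r * x)%C = r * Cmod x)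
    by (intros; rewrite Cmod_mult, Cmod_R, Rabs_right; lra).
  assert (B2 : 9 * (Cmod a2 * Cmod a2) <= 5 * M).
  { rewrite <- Cmod_mult, <- Hn by lra.
    replace (RtoC 9 * (a2 * a2))%C with (RtoC 3 * (RtoC 2 * a3 - a2 * a2) + RtoC 2 * (RtoC 6 * a2 * a2 - RtoC 3 * a3))%C
      by (apply C_eq; simpl; ring).
    eapply Rle_trans; [apply Cmod_triangle|]. rewrite !Hn by lra. lra. }
  assert (B3 : 9 * Cmod a3 <= 7 * M).
  { rewrite <- Hn by lra.
    replace (RtoC 9 * a3)%C with (RtoC 6 * (RtoC 2 * a3 - a2 * a2) + (RtoC 6 * a2 * a2 - RtoC 3 * a3))%C
      by (apply C_eq; simpl; ring).
    eapply Rle_trans; [apply Cmod_triangle|]. rewrite !Hn by lra. lra. }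
  split; [|lra].
  pose proof (Cmod_ge_0 a2).
  replace (Cmod a2) with (sqrt (9 * (Cmod a2 * Cmod a2)) / 3)
    by (rewrite sqrt_mult, sqrt_square by nra; replace 9 with (3 * 3) by ring; rewrite sqrt_square by lra; field).
  apply Rmult_le_compat_r; [lra|]. apply sqrt_le_1_alt. lra.
Qed.

Theorem coefficient_bounds (phi : C -> C) (Bc : nat -> C) (b1 b2 : R) (a : nat -> C)
    (f F df dF g : C -> C) (r0 : R) :
  has_seriesC Bc phi -> Bc O = C1 -> Bc 1%nat = RtoC b1 -> 0 < b1 -> Bc 2%nat = RtoC b2 ->
  has_seriesC a f -> a O = C0 -> a 1%nat = C1 ->
  (forall v, Cmod v < 1 -> has_cderiv f v (df v)) -> (forall v, Cmod v < 1 -> has_cderiv F v (dF v)) ->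
  0 < r0 -> (forall w, Cmod w < r0 -> f (F w) = w) -> F C0 = C0 ->
  (forall z, Cmod z < 1 -> z <> C0 -> g z = (z * df z / f z)%C) -> g C0 = C1 ->
  subordinateC g phi -> subordinateC dF phi ->
  Cmod (a 2%nat) <= sqrt (5 * (b1 + Rabs (b2 - b1))) / 3 /\ Cmod (a 3%nat) <= 7 * (b1 + Rabs (b2 - b1)) / 9.
Proof.
  intros HSB hB0 hB1 hb1 hB2 HSa ha0 ha1 Hdf HdF hr0 Hinv hF0 Hg hg0 Hsub1 Hsub2.
  apply bounds_from_second_coefficients.
  - exact (subordinate_second_coefficient phi Bc b1 b2 g _ _ HSB hB0 hB1 hb1 hB2
      (starlike_quotient_expansion f df g a HSa ha0 ha1 Hdf Hg hg0) Hsub1).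
  - exact (subordinate_second_coefficient phi Bc b1 b2 dF _ _ HSB hB0 hB1 hb1 hB2
      (inverse_derivative_expansion f a F dF r0 HSa ha0 ha1 HdF hr0 Hinv hF0) Hsub2).
Qed.

(** * Transport from the record type Cplx to C *)

Import Defs.

Definition toC (z : Cplx) : C := (Re z, Im z).
Definition ofC (c : C) : Cplx := mkC (fst c) (snd c).

Definition lift (f : Cplx -> Cplx) : C -> C := fun c => toC (f (ofC c)).

Lemma toC_ofC c : toC (ofC c) = c.
Proof. destruct c; reflexivity. Qed.

Lemma ofC_toC z : ofC (toC z) = z.
Proof. destruct z; reflexivity. Qed.

Lemma toC_inj z w : toC z = toC w -> z = w.
Proof. intros H. rewrite <- (ofC_toC z), <- (ofC_toC w), H. reflexivity. Qed.

Lemma toC_add z w : toC (Cadd z w) = (toC z + toC w)%C.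
Proof. reflexivity. Qed.

Lemma toC_mul z w : toC (Cmul z w) = (toC z * toC w)%C.
Proof. reflexivity. Qed.

Lemma toC_sub z w : toC (Csub z w) = (toC z - toC w)%C.
Proof. reflexivity. Qed.

Lemma toC_div z w : toC (Defs.Cdiv z w) = (toC z / toC w)%C.
Proof.
  unfold Defs.Cdiv, Defs.Cinv, toC; simpl. unfold Coquelicot.Complex.Cdiv, Coquelicot.Complex.Cinv; simpl.
  replace (Re w * (Re w * 1) + Im w * (Im w * 1)) with (Re w * Re w + Im w * Im w) by ring.
  apply C_eq; simpl; ring.
Qed.

Lemma toC_pow z n : toC (Defs.Cpow z n) = (toC z ^ n)%C.
Proof. induction n as [|n IH]; simpl; [reflexivity|]. rewrite toC_mul, IH. reflexivity. Qed.

Lemma Cnorm_toC z : Cnorm z = Cmod (toC z).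
Proof. unfold Cnorm, Cmod, toC; simpl. f_equal. ring. Qed.

Lemma inD_ofC w : Cmod w < 1 -> inD (ofC w).
Proof. unfold inD. rewrite Cnorm_toC, toC_ofC. auto. Qed.

Lemma lift_at0 f : f Czero = Czero -> lift f C0 = C0.
Proof. intros H. unfold lift. change (ofC C0) with Czero. rewrite H. reflexivity. Qed.

Lemma Cpsum_taylor_poly c z n : toC (Cpsum c z n) = taylor_poly (fun j => toC (c j)) n (toC z).
Proof.
  induction n as [|n IH]; [reflexivity|].
  change (Cpsum c z (S n)) with (Cadd (Cpsum c z n) (Cmul (c (S n)) (Defs.Cpow z (S n)))).
  rewrite toC_add, toC_mul, toC_pow, IH. reflexivity.
Qed.

Lemma has_series_lift c f : has_series c f -> has_seriesC (fun j => toC (c j)) (lift f).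
Proof.
  intros H w hw eps he. destruct (H (ofC w) (inD_ofC w hw) eps he) as [N HN].
  exists N. intros n hn. specialize (HN n hn). rewrite Cnorm_toC, toC_sub, Cpsum_taylor_poly, toC_ofC in HN. exact HN.
Qed.

Lemma is_cderiv_lift f z L : is_cderiv f z L -> has_cderiv (lift f) (toC z) (toC L).
Proof.
  intros H eps he. destruct (H eps he) as [d [hd Hd]]. exists d. split; auto.
  intros k hk. unfold lift.
  destruct (Ceq_dec (ofC k) Czero) as [e|hne].
  - replace k with C0 by (rewrite <- (toC_ofC k), e; reflexivity).
    replace (toC z + C0)%C with (toC z) by ring. rewrite ofC_toC.
    replace (toC (f z) - toC (f z) - toC L * C0)%C with C0 by ring. rewrite Cmod_0. lra.
  - assert (kn : k <> C0) by (intro E0; apply hne; rewrite E0; reflexivity).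
    specialize (Hd (ofC k) hne ltac:(rewrite Cnorm_toC, toC_ofC; auto)).
    rewrite Cnorm_toC, toC_sub, toC_div, toC_sub, toC_ofC in Hd.
    replace (ofC (toC z + k)%C) with (Cadd z (ofC k)) by (apply toC_inj; rewrite toC_add, !toC_ofC; reflexivity).
    rewrite ofC_toC.
    replace (toC (f (Cadd z (ofC k))) - toC (f z) - toC L * k)%C with
      (k * ((toC (f (Cadd z (ofC k))) - toC (f z)) / k - toC L))%C by (field; auto).
    rewrite Cmod_mult. pose proof (Cmod_ge_0 k). rewrite Rmult_comm. apply Rmult_le_compat_r; lra.
Qed.

Lemma derivative_lift f df : (forall z, inD z -> is_cderiv f z (df z)) ->
  forall v, Cmod v < 1 -> has_cderiv (lift f) v (lift df v).
Proof.
  intros H v hv. unfold lift at 2. rewrite <- (toC_ofC v) at 1. apply is_cderiv_lift, H, inD_ofC, hv.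
Qed.

Lemma subordinate_lift g h : subordinate g h -> subordinateC (lift g) (lift h).
Proof.
  intros [om [Han [Hin [h0 Hs]]]]. exists (lift om). split; [split; [|split]|].
  - intros w hw. destruct (Han (ofC w) (inD_ofC w hw)) as [L HL].
    exists (toC L). rewrite <- (toC_ofC w) at 1. apply is_cderiv_lift; auto.
  - intros w hw. unfold lift. rewrite <- Cnorm_toC. apply Hin, inD_ofC, hw.
  - apply lift_at0; auto.
  - intros z hz. unfold lift. rewrite ofC_toC, Hs by (apply inD_ofC; auto). reflexivity.
Qed.

Lemma starlike_quot_lift f df z : z <> C0 ->
  lift (starlike_quot f df) z = (z * lift df z / lift f z)%C.
Proof.
  intros hz. unfold lift, starlike_quot. destruct (Ceq_dec (ofC z) Czero) as [e|e].
  - exfalso. apply hz. rewrite <- (toC_ofC z), e. reflexivity.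
  - rewrite toC_div, toC_mul, toC_ofC. reflexivity.
Qed.

Lemma normalized_inverse_at0 a f F r : has_series a f -> a O = Czero -> univalent_D f -> 0 < r ->
  (forall w, Cnorm w < r -> inD (F w) /\ f (F w) = w) -> F Czero = Czero.
Proof.
  intros HS ha0 Hunf hr HFr.
  assert (f0 : f Czero = Czero).
  { apply toC_inj. change (toC (f Czero)) with (lift f C0).
    pose proof (bigO_at0 1 _ (le_n 1) (series_remainder _ _ 0 (has_series_lift a f HS))) as H0.
    cbv beta in H0. simpl taylor_poly in H0. rewrite ha0 in H0. change (toC Czero) with C0 in H0.
    replace (lift f C0) with ((lift f C0 - C0) + C0)%C by ring. rewrite H0. apply C_eq; simpl; ring. }
  assert (n0 : Cnorm Czero = 0) by (rewrite Cnorm_toC; change (toC Czero) with C0; apply Cmod_0).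
  destruct (HFr Czero ltac:(rewrite n0; auto)) as [hin hff].
  apply Hunf; auto.
  - unfold inD. rewrite n0. lra.
  - rewrite hff, f0. reflexivity.
Qed.

Theorem theorem5
  (phi : Cplx -> Cplx) (B : nat -> Cplx)
  (Hphi : has_series B phi) (HB0 : B O = Cone)
  (HB1 : 0 < Re (B 1%nat)) (HB1r : Im (B 1%nat) = 0) (HB2r : Im (B 2%nat) = 0)
  (a : nat -> Cplx) (f F df dF : Cplx -> Cplx)
  (Hsig : bi_univalent_with a f F)
  (Hdf : forall z, inD z -> is_cderiv f z (df z))
  (HdF : forall w, inD w -> is_cderiv F w (dF w))
  (Hstar : subordinate (starlike_quot f df) phi)
  (HR : subordinate dF phi) :
  Cnorm (a 2%nat) <= sqrt (5 * (Re (B 1%nat) + Rabs (Re (B 2%nat) - Re (B 1%nat)))) / 3 /\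
  Cnorm (a 3%nat) <= 7 * (Re (B 1%nat) + Rabs (Re (B 2%nat) - Re (B 1%nat))) / 9.
Proof.
  destruct Hsig as [HS [ha0 [ha1 [Hunf [_ [_ [r [hr HFr]]]]]]]].
  rewrite !Cnorm_toC.
  apply (coefficient_bounds (lift phi) (fun j => toC (B j)) (Re (B 1%nat)) (Re (B 2%nat)) (fun j => toC (a j))
    (lift f) (lift F) (lift df) (lift dF) (lift (starlike_quot f df)) r);
    try apply has_series_lift; try apply derivative_lift; try apply subordinate_lift; auto.
  - rewrite HB0; reflexivity.
  - unfold toC; rewrite HB1r; reflexivity.
  - unfold toC; rewrite HB2r; reflexivity.
  - rewrite ha0; reflexivity.
  - rewrite ha1; reflexivity.
  - intros w hw. unfold lift. rewrite ofC_toC. destruct (HFr (ofC w) ltac:(rewrite Cnorm_toC, toC_ofC; auto)) as [_ ->].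
    apply toC_ofC.
  - apply lift_at0, (normalized_inverse_at0 a f F r); auto.
  - intros z _ hz. apply starlike_quot_lift, hz.
  - unfold lift, starlike_quot. change (ofC C0) with Czero.
    destruct (Ceq_dec Czero Czero); [reflexivity|congruence].
Qed.
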